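(* Let $r\ge1$, $\mu\in\mathcal P_r$ and $1\le s\le r$. For every $n\in\mathbb N$ let $\mathbf x_n\in\Xi_n$ minimize $\mathbf y\mapsto d_s(\delta^{\mathbf u_n}_{\mathbf y},\mu)$ over $\Xi_n$ (a best uniform $s$-approximation). Then $\lim_{n\to\infty}d_r(\delta^{\mathbf u_n}_{\mathbf x_n},\mu)=0$. In particular, $\lim_{n\to\infty}d_r(\delta^{\mathbf u_n}_{\mathbf x_n},\mu)=0$ for $x_{n,i}=F_\mu^{-1}\big(\tfrac{2i-1}{2n}\big)$, $1\le i\le n$.
   Context: $\mathcal P$ denotes the set of Borel probability measures on $\mathbb R$; $\mathcal P_r=\{\mu\in\mathcal P:\int|x|^r{\rm d}\mu(x)<\infty\}$. For $\mu\in\mathcal P$, $F_\mu(x)=\mu(]-\infty,x])$ and $F_\mu^{-1}(t)=\sup\{x: F_\mu(x)\le t\}$, $t\in]0,1[$. $d_r(\mu,\nu)=\big(\int_0^1|F_\mu^{-1}(t)-F_\nu^{-1}(t)|^r{\rm d}t\big)^{1/r}$. $\Xi_n=\{\mathbf x\in\mathbb R^n:x_1\le\dots\le x_n\}$, $\mathbf u_n=(1/n,\dots,1/n)$, $\delta^{\mathbf u_n}_{\mathbf x}=\frac1n\sum_{i=1}^n\delta_{x_i}$. *)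

From Stdlib Require Import Reals Lra ClassicalEpsilon.
Open Scope R_scope.

(* Real power with the convention  rpow x y = 0  for x <= 0
   (we only use it for x >= 0, y > 0, where 0^y = 0). *)
Definition rpow (x y : R) : R := if Rle_dec x 0 then 0 else Rpower x y.

(* A Borel probability measure mu on R is represented by its distribution
   function F_mu : nondecreasing, right-continuous, F(-oo)=0, F(+oo)=1. *)
Definition is_cdf (F : R -> R) : Prop :=
  (forall x y, x <= y -> F x <= F y) /\
  (forall x eps, 0 < eps -> exists del, 0 < del /\
      forall y, x <= y < x + del -> Rabs (F y - F x) < eps) /\
  (forall eps, 0 < eps -> exists M, forall x, x <= - M -> F x < eps) /\
  (forall eps, 0 < eps -> exists M, forall x, M <= x -> 1 - eps < F x).

Definition qf (F : R -> R) (t : R) : R :=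
  epsilon (inhabits 0) (fun y => is_lub (fun x => F x <= t) y).

(* Integral over ]0,1[ of a (nonnegative) function, as the supremum of its
   Riemann integrals over compact subintervals [a,b] of ]0,1[. *)
Definition int01 (f : R -> R) (I : R) : Prop :=
  is_lub (fun v => exists a b (pr : Riemann_integrable f a b),
                     0 < a /\ a < b /\ b < 1 /\ v = RiemannInt pr) I.

(* d_r(mu,nu) = D  (D finite), mu, nu given by distribution functions. *)
Definition dist_r (r : R) (F G : R -> R) (D : R) : Prop :=
  exists I, int01 (fun t => rpow (Rabs (qf F t - qf G t)) r) I /\
            D = rpow I (/ r).

(* mu in P_r, i.e. int |x|^r dmu < oo, written via the quantile function
   (int |x|^r dmu = int_0^1 |F^{-1}(t)|^r dt). *)
Definition in_Pr (r : R) (F : R -> R) : Prop :=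
  exists I, int01 (fun t => rpow (Rabs (qf F t)) r) I.

Fixpoint cntle (x : nat -> R) (y : R) (n : nat) : R :=
  match n with
  | O => 0
  | S k => cntle x y k + (if Rle_dec (x k) y then 1 else 0)
  end.

(* distribution function of delta^{u_n}_x = (1/n) sum_{i<n} delta_{x_i} *)
Definition emp_cdf (n : nat) (x : nat -> R) (y : R) : R := cntle x y n / INR n.

(* x (indices 0..n-1) lies in Xi_n *)
Definition in_Xi (n : nat) (x : nat -> R) : Prop :=
  forall i j, (i <= j)%nat -> (j < n)%nat -> x i <= x j.

(* With q = F^{-1}, d_r(delta_x, mu)^r is the integral over ]0,1[ of |x_k - q t|^r,
   t ranging over the k-th piece [k/n, (k+1)/n[.  If every interior point x_k lies in
   [q (k/n), q ((k+1)/n)] ("bracketed"), the interior pieces cost at most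
   (1/n) sum_k (q ((k+1)/n) - q (k/n))^r: where |q| <= M this is at most
   (2M)^(r-1)/n times a telescoping sum, elsewhere it is dominated by tails of the
   integral of |q|^r, so it vanishes as n grows.  It remains to control the two end
   pieces.  The midpoint quantizer is bracketed by construction and its end points are
   q (1/(2n)) and q (1 - 1/(2n)).  An s-optimal quantizer is bracketed, because
   clamping the x_k into their intervals would otherwise lower the s-cost; comparing it
   with the quantizer whose end points are moved to q (1/n) and q (1 - 1/n) bounds the
   s-cost of its end pieces, and |y|^s <= K^s + K^(s-r) |y|^r with K proportional to the
   distance of x_0 below q (1/(2n)) turns this into a bound on their r-cost.
   Statements about the right end follow from those about the left end through the
   reflection phi |-> - phi (1 - .). *)

From Stdlib Require Import Reals Lra Lia List RList ZArith Classical ClassicalEpsilon.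
From Coquelicot Require Import Coquelicot.
Open Scope R_scope.
Implicit Types f : R -> R.

Lemma exists_nat_inv_le m : 0 < m ->
  exists N, (1 <= N)%nat /\ forall n, (N <= n)%nat -> 1 / INR n <= m.
Proof.
  intros Hm. destruct (archimed (/ m)) as [Hup _].
  exists (S (Z.to_nat (up (/ m)))). split; [lia|]. intros n Hn.
  assert (HN : / m < INR n).
  { apply Rlt_le_trans with (INR (S (Z.to_nat (up (/ m))))); [|apply le_INR; exact Hn].
    rewrite S_INR. destruct (Z_lt_le_dec (up (/ m)) 0).
    - assert (IZR (up (/ m)) <= -1) by (apply IZR_le; lia).
      pose proof (pos_INR (Z.to_nat (up (/ m)))). lra.
    - rewrite INR_IZR_INZ, Z2Nat.id by lia. lra. }
  assert (0 < / m) by (apply Rinv_0_lt_compat; lra).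
  unfold Rdiv. rewrite Rmult_1_l, <- (Rinv_inv m).
  apply Rinv_le_contravar; lra.
Qed.

(** * Riemann integrability of monotone functions *)

Lemma StepFun_ext_interior (a b : R) (phi : StepFun a b) (g : R -> R) :
  (forall x, Rmin a b < x < Rmax a b -> phi x = g x) ->
  exists pr : IsStepFun g a b, RiemannInt_SF (mkStepFun pr) = RiemannInt_SF phi.
Proof.
  destruct phi as [fe [l [lf Had]]]; simpl; intros Hext.
  assert (Had' : adapted_couple g a b l lf).
  { destruct Had as [Ho [H0 [H1 [Hl Hc]]]].
    do 4 (split; [assumption|]).
    intros i Hi x Hx. rewrite <- (Hc i Hi x Hx). symmetry. apply Hext.
    assert (Hin1 : In (pos_Rl l i) l) by (apply RList_P3; exists i; split; [reflexivity|lia]).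
    assert (Hin2 : In (pos_Rl l (S i)) l) by (apply RList_P3; exists (S i); split; [reflexivity|lia]).
    pose proof (RList_P5 l _ Ho Hin1). pose proof (RList_P7 l _ Ho Hin2).
    unfold open_interval in Hx. rewrite H0, H1 in *. lra. }
  exists (existT _ l (existT _ lf Had')). reflexivity.
Qed.

Definition step_approx f (a b e : R) : Prop :=
  exists phi psi : StepFun a b,
    (forall t, a <= t <= b -> Rabs (f t - phi t) <= psi t) /\ RiemannInt_SF psi <= e.

Lemma step_approx_glue f a b c e1 e2 : a <= b -> b <= c ->
  step_approx f a b e1 -> step_approx f b c e2 -> step_approx f a c (e1 + e2).
Proof.
  intros Hab Hbc [phi1 [psi1 [H1 I1]]] [phi2 [psi2 [H2 I2]]].
  set (gphi := fun t => if Rle_dec t b then phi1 t else phi2 t).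
  set (gpsi := fun t => if Rle_dec t b then psi1 t else psi2 t).
  assert (Hl : forall g1 g2 : R -> R, forall x, Rmin a b < x < Rmax a b ->
                 g1 x = (if Rle_dec x b then g1 x else g2 x)).
  { intros. rewrite Rmin_left, Rmax_right in * by lra. destruct (Rle_dec x b); [reflexivity|lra]. }
  assert (Hr : forall g1 g2 : R -> R, forall x, Rmin b c < x < Rmax b c ->
                 g2 x = (if Rle_dec x b then g1 x else g2 x)).
  { intros. rewrite Rmin_left, Rmax_right in * by lra. destruct (Rle_dec x b); [lra|reflexivity]. }
  destruct (StepFun_ext_interior a b phi1 gphi (Hl phi1 phi2)) as [pa _].
  destruct (StepFun_ext_interior b c phi2 gphi (Hr phi1 phi2)) as [pb _].
  destruct (StepFun_ext_interior a b psi1 gpsi (Hl psi1 psi2)) as [qa Eqa].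
  destruct (StepFun_ext_interior b c psi2 gpsi (Hr psi1 psi2)) as [qb Eqb].
  exists (mkStepFun (StepFun_P41 Hab Hbc pa pb)), (mkStepFun (StepFun_P41 Hab Hbc qa qb)). split.
  - intros t Ht. simpl. unfold gphi, gpsi.
    destruct (Rle_dec t b); [apply H1|apply H2]; lra.
  - simpl. rewrite <- (StepFun_P43 qa qb), Eqa, Eqb. lra.
Qed.

Lemma step_approx_mono f a b : a <= b ->
  (forall u v, a <= u -> u <= v -> v <= b -> f u <= f v) ->
  step_approx f a b ((b - a) * (f b - f a)).
Proof.
  intros Hab Hm.
  exists (mkStepFun (StepFun_P4 a b (f a))), (mkStepFun (StepFun_P4 a b (f b - f a))). split.
  - intros t Ht. simpl. unfold fct_cte.
    pose proof (Hm a t ltac:(lra) ltac:(lra) ltac:(lra)).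
    pose proof (Hm t b ltac:(lra) ltac:(lra) ltac:(lra)).
    rewrite Rabs_right; lra.
  - rewrite StepFun_P18. lra.
Qed.

(* Cutting [a, b] into N equal pieces divides the oscillation bound by N. *)
Lemma step_approx_mono_subdiv f : forall N a b, (1 <= N)%nat -> a <= b ->
  (forall u v, a <= u -> u <= v -> v <= b -> f u <= f v) ->
  step_approx f a b ((b - a) / INR N * (f b - f a)).
Proof.
  induction N as [|N IH]; intros a b HN Hab Hm; [lia|].
  destruct (Nat.eq_dec N 0) as [->|HN0].
  { replace ((b - a) / INR 1 * (f b - f a)) with ((b - a) * (f b - f a)) by (simpl; field).
    apply step_approx_mono; auto. }
  assert (HNr : 1 <= INR N) by (apply (le_INR 1); lia).
  rewrite S_INR. set (c := a + (b - a) / (INR N + 1)).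
  assert (Hstep : 0 <= (b - a) / (INR N + 1) <= b - a).
  { split; [apply Rdiv_le_0_compat; lra|].
    apply Rmult_le_reg_r with (INR N + 1); [lra|]. field_simplify; nra. }
  assert (Hc1 : a <= c) by (unfold c; lra).
  assert (Hc2 : c <= b) by (unfold c; lra).
  pose proof (step_approx_mono f a c Hc1 (fun u v h1 h2 h3 => Hm u v h1 h2 ltac:(lra))) as A1.
  pose proof (IH c b ltac:(lia) Hc2 (fun u v h1 h2 h3 => Hm u v ltac:(lra) h2 h3)) as A2.
  replace ((b - a) / (INR N + 1) * (f b - f a)) with
    ((c - a) * (f c - f a) + (b - c) / INR N * (f b - f c)) by (unfold c; field; lra).
  exact (step_approx_glue f a c b _ _ Hc1 Hc2 A1 A2).
Qed.

Lemma Riemann_integrable_step_approx f a b : a <= b ->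
  (forall e, 0 < e -> step_approx f a b e) -> Riemann_integrable f a b.
Proof.
  intros Hab H eps.
  assert (Hex : exists phi psi : StepFun a b,
    (forall t, Rmin a b <= t <= Rmax a b -> Rabs (f t - phi t) <= psi t) /\
    Rabs (RiemannInt_SF psi) < eps).
  { destruct (H (eps / 2)) as [phi [psi [H1 H2]]]; [destruct eps; simpl; lra|].
    exists phi, psi. rewrite Rmin_left, Rmax_right by lra. split; [exact H1|].
    assert (0 <= RiemannInt_SF psi).
    { rewrite <- (Rmult_0_l (b - a)), <- (StepFun_P18 a b 0).
      apply StepFun_P37; auto. intros x Hx. simpl. unfold fct_cte.
      pose proof (H1 x ltac:(lra)). pose proof (Rabs_pos (f x - phi x)). lra. }
    rewrite Rabs_right by lra. destruct eps; simpl in *; lra. }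
  apply constructive_indefinite_description in Hex. destruct Hex as [phi Hphi].
  apply constructive_indefinite_description in Hphi. destruct Hphi as [psi Hpsi].
  exists phi, psi. exact Hpsi.
Qed.

Lemma ex_RInt_mono f a b : a <= b ->
  (forall u v, a <= u -> u <= v -> v <= b -> f u <= f v) -> ex_RInt f a b.
Proof.
  intros Hab Hm. apply ex_RInt_Reals_1, Riemann_integrable_step_approx; auto. intros e He.
  assert (Hfab : f a <= f b) by (apply Hm; lra).
  set (K := (b - a) * (f b - f a)). assert (HK : 0 <= K) by (unfold K; nra).
  destruct (exists_nat_inv_le (e / (K + 1))) as [N [HN1 HN]]; [apply Rdiv_lt_0_compat; lra|].
  destruct (step_approx_mono_subdiv f N a b HN1 Hab Hm) as [phi [psi [H1 H2]]].
  exists phi, psi. split; auto.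
  pose proof (HN N (Nat.le_refl N)) as HNe.
  assert (0 < INR N) by (apply lt_0_INR; lia).
  assert (K * (1 / INR N) <= K * (e / (K + 1))) by (apply Rmult_le_compat_l; lra).
  assert (K * (e / (K + 1)) <= e).
  { apply Rmult_le_reg_r with (K + 1); [lra|]. field_simplify; nra. }
  replace ((b - a) / INR N * (f b - f a)) with (K * (1 / INR N)) in H2 by (unfold K; field; lra).
  lra.
Qed.

Lemma ex_RInt_antimono f a b : a <= b ->
  (forall u v, a <= u -> u <= v -> v <= b -> f v <= f u) -> ex_RInt f a b.
Proof.
  intros Hab Hm.
  assert (H : ex_RInt (fun t => - f t) a b).
  { apply ex_RInt_mono; auto. intros u v h1 h2 h3. pose proof (Hm u v h1 h2 h3). lra. }
  apply ex_RInt_opp in H. eapply ex_RInt_ext; [|exact H].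
  intros x _. simpl. unfold opp; simpl. ring.
Qed.

Lemma rpow_ge0 x p : 0 <= rpow x p.
Proof. unfold rpow. destruct (Rle_dec x 0); [lra|]. left; apply exp_pos. Qed.

Lemma rpow_gt0 x p : 0 < x -> 0 < rpow x p.
Proof. intros. unfold rpow. destruct (Rle_dec x 0); [lra|]. apply exp_pos. Qed.

Lemma rpow_nonpos_l x p : x <= 0 -> rpow x p = 0.
Proof. intros. unfold rpow. destruct (Rle_dec x 0); lra. Qed.

Lemma rpow_0_l p : rpow 0 p = 0.
Proof. apply rpow_nonpos_l; lra. Qed.

Lemma rpow_Rpower x p : 0 < x -> rpow x p = Rpower x p.
Proof. intros. unfold rpow. destruct (Rle_dec x 0); [lra|reflexivity]. Qed.

Lemma rpow_le_compat x y p : 0 <= p -> 0 <= x <= y -> rpow x p <= rpow y p.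
Proof.
  intros Hp Hxy. destruct (Req_dec x 0) as [->|Hx].
  - rewrite rpow_0_l. apply rpow_ge0.
  - rewrite !rpow_Rpower by lra. apply Rle_Rpower_l; lra.
Qed.

Lemma rpow_lt_compat x y p : 0 < p -> 0 <= x < y -> rpow x p < rpow y p.
Proof.
  intros Hp Hxy. destruct (Req_dec x 0) as [->|Hx].
  - rewrite rpow_0_l. apply rpow_gt0. lra.
  - rewrite !rpow_Rpower by lra. apply Rlt_Rpower_l; lra.
Qed.

Lemma rpow_le_reg x y p : 0 < p -> 0 <= y -> rpow x p <= rpow y p -> x <= y.
Proof.
  intros Hp Hy H. destruct (Rle_lt_dec x y); auto.
  pose proof (rpow_lt_compat y x p Hp ltac:(lra)). lra.
Qed.

Lemma rpow_mult_distr x y p : 0 <= x -> 0 <= y -> rpow (x * y) p = rpow x p * rpow y p.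
Proof.
  intros Hx Hy. destruct (Req_dec x 0) as [->|Hx0]; [rewrite Rmult_0_l, !rpow_0_l; ring|].
  destruct (Req_dec y 0) as [->|Hy0]; [rewrite Rmult_0_r, !rpow_0_l; ring|].
  rewrite !rpow_Rpower by nra. symmetry. apply Rpower_mult_distr; lra.
Qed.

Lemma rpow_plus x p q : 0 <= x -> 0 < p -> 0 < q -> rpow x (p + q) = rpow x p * rpow x q.
Proof.
  intros Hx Hp Hq. destruct (Req_dec x 0) as [->|Hx0]; [rewrite !rpow_0_l; ring|].
  rewrite !rpow_Rpower by lra. apply Rpower_plus.
Qed.

Lemma rpow_1 x : 0 <= x -> rpow x 1 = x.
Proof.
  intros Hx. destruct (Req_dec x 0) as [->|Hx0]; [apply rpow_0_l|].
  rewrite rpow_Rpower by lra. apply Rpower_1. lra.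
Qed.

Lemma rpow_mult x p q : 0 <= x -> rpow (rpow x p) q = rpow x (p * q).
Proof.
  intros Hx. destruct (Req_dec x 0) as [->|Hx0]; [rewrite !rpow_0_l; reflexivity|].
  assert (Hp : 0 < Rpower x p) by apply exp_pos.
  rewrite (rpow_Rpower x p), (rpow_Rpower (Rpower x p) q), (rpow_Rpower x (p * q)) by lra.
  apply Rpower_mult.
Qed.

Lemma rpow_rpow_inv x p : 0 <= x -> 0 < p -> rpow (rpow x p) (/ p) = x.
Proof. intros. rewrite rpow_mult, Rinv_r by lra. apply rpow_1; auto. Qed.

Lemma rpow_plus_le u v p : 0 <= p -> 0 <= u -> 0 <= v ->
  rpow (u + v) p <= rpow 2 p * (rpow u p + rpow v p).
Proof.
  intros Hp Hu Hv.
  assert (Hm : 0 <= Rmax u v) by (apply (Rle_trans _ u); [lra|apply Rmax_l]).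
  assert (H : rpow (u + v) p <= rpow (2 * Rmax u v) p).
  { apply rpow_le_compat; auto. pose proof (Rmax_l u v). pose proof (Rmax_r u v). lra. }
  rewrite rpow_mult_distr in H by lra.
  pose proof (rpow_ge0 u p). pose proof (rpow_ge0 v p). pose proof (rpow_ge0 2 p).
  assert (rpow (Rmax u v) p <= rpow u p + rpow v p) by (unfold Rmax; destruct (Rle_dec u v); lra).
  nra.
Qed.

Lemma rpow_plus3_le u v w p : 0 <= p -> 0 <= u -> 0 <= v -> 0 <= w ->
  rpow (u + v + w) p <= rpow 3 p * (rpow u p + rpow v p + rpow w p).
Proof.
  intros Hp Hu Hv Hw. set (m := Rmax u (Rmax v w)).
  assert (Hm1 : u <= m) by apply Rmax_l.
  assert (Hm2 : v <= m) by (eapply Rle_trans; [apply (Rmax_l v w)|apply Rmax_r]).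
  assert (Hm3 : w <= m) by (eapply Rle_trans; [apply (Rmax_r v w)|apply Rmax_r]).
  assert (H : rpow (u + v + w) p <= rpow (3 * m) p) by (apply rpow_le_compat; lra).
  rewrite rpow_mult_distr in H by lra.
  pose proof (rpow_ge0 u p). pose proof (rpow_ge0 v p). pose proof (rpow_ge0 w p).
  pose proof (rpow_ge0 3 p).
  assert (rpow m p <= rpow u p + rpow v p + rpow w p).
  { unfold m, Rmax. destruct (Rle_dec v w); destruct (Rle_dec u _); lra. }
  nra.
Qed.

Lemma rpow_plus_ge u v p : 1 <= p -> 0 <= u -> 0 <= v ->
  rpow u p + rpow v p <= rpow (u + v) p.
Proof.
  intros Hp Hu Hv.
  destruct (Req_dec u 0) as [->|Hu0]; [rewrite rpow_0_l, !Rplus_0_l; lra|].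
  destruct (Req_dec v 0) as [->|Hv0]; [rewrite rpow_0_l, !Rplus_0_r; lra|].
  destruct (Req_dec p 1) as [->|Hp1]; [rewrite !rpow_1 by lra; lra|].
  replace p with (1 + (p - 1)) by ring.
  rewrite !rpow_plus, !rpow_1 by lra.
  assert (rpow u (p - 1) <= rpow (u + v) (p - 1)) by (apply rpow_le_compat; lra).
  assert (rpow v (p - 1) <= rpow (u + v) (p - 1)) by (apply rpow_le_compat; lra).
  nra.
Qed.

Lemma rpow_le_compat_nonpos_exp x y e : e <= 0 -> 0 < x <= y -> rpow y e <= rpow x e.
Proof.
  intros He Hxy. rewrite !rpow_Rpower by lra. unfold Rpower.
  destruct (Req_dec x y) as [->|Hne]; [lra|].
  assert (ln x < ln y) by (apply ln_increasing; lra).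
  destruct (Req_dec e 0) as [->|He0]; [rewrite !Rmult_0_l; lra|].
  left. apply exp_increasing. nra.
Qed.

(* Below the level K use K^s, above it trade K^(s-r) for the r-th power. *)
Lemma rpow_le_split G K s r : 0 <= G -> 0 < K -> 0 < s -> s <= r ->
  rpow G s <= rpow K s + rpow K (s - r) * rpow G r.
Proof.
  intros HG HK Hs Hsr.
  pose proof (rpow_ge0 K (s - r)). pose proof (rpow_ge0 G r). pose proof (rpow_ge0 K s).
  destruct (Rle_lt_dec G K).
  - assert (rpow G s <= rpow K s) by (apply rpow_le_compat; lra). nra.
  - assert (E : rpow G s = rpow G (s - r) * rpow G r).
    { rewrite !rpow_Rpower by lra. rewrite <- Rpower_plus. f_equal. ring. }
    assert (rpow G (s - r) <= rpow K (s - r)) by (apply rpow_le_compat_nonpos_exp; lra).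
    rewrite E. pose proof (Rmult_le_compat_r (rpow G r) _ _ H0 H2). lra.
Qed.

Lemma rpow_le_1_plus G s r : 0 <= G -> 0 <= s -> s <= r -> rpow G s <= 1 + rpow G r.
Proof.
  intros HG Hs Hsr. pose proof (rpow_ge0 G r).
  destruct (Rle_lt_dec G 1).
  - assert (rpow G s <= rpow 1 s) by (apply rpow_le_compat; lra).
    rewrite (rpow_Rpower 1 s) in H0 by lra. unfold Rpower in H0. rewrite ln_1, Rmult_0_r, exp_0 in H0. lra.
  - rewrite !rpow_Rpower by lra. assert (Rpower G s <= Rpower G r) by (apply Rle_Rpower; lra). lra.
Qed.

Lemma rpow_diff_le a b r : 0 <= r ->
  rpow (a - b) r <= rpow 2 r * (rpow (Rabs a) r + rpow (Rabs b) r).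
Proof.
  intros Hr. pose proof (rpow_ge0 2 r). pose proof (rpow_ge0 (Rabs a) r).
  pose proof (rpow_ge0 (Rabs b) r).
  destruct (Rle_lt_dec (a - b) 0); [rewrite rpow_nonpos_l by lra; nra|].
  eapply Rle_trans; [|apply rpow_plus_le; auto; apply Rabs_pos].
  apply rpow_le_compat; auto. split; [lra|].
  pose proof (Rle_abs a). pose proof (Rle_abs (- b)). rewrite Rabs_Ropp in *. lra.
Qed.

Lemma rpow_abs_diff_le a b r : 0 <= r ->
  rpow (Rabs (a - b)) r <= rpow 2 r * (rpow (Rabs a) r + rpow (Rabs b) r).
Proof.
  intros Hr. eapply Rle_trans; [|apply rpow_plus_le; auto; apply Rabs_pos].
  apply rpow_le_compat; auto. split; [apply Rabs_pos|].
  pose proof (Rabs_triang a (- b)). rewrite Rabs_Ropp in *. unfold Rminus. lra.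
Qed.

Lemma rpow_abs_between x y z r : 0 <= r -> x <= y -> y <= z ->
  rpow (Rabs y) r <= rpow (Rabs x) r + rpow (Rabs z) r.
Proof.
  intros Hr Hxy Hyz. pose proof (rpow_ge0 (Rabs x) r). pose proof (rpow_ge0 (Rabs z) r).
  destruct (Rle_lt_dec (Rabs y) (Rabs z)).
  - assert (rpow (Rabs y) r <= rpow (Rabs z) r)
      by (apply rpow_le_compat; auto; split; [apply Rabs_pos|lra]). lra.
  - assert (Rabs y <= Rabs x) by (unfold Rabs in *; repeat destruct (Rcase_abs _); lra).
    assert (rpow (Rabs y) r <= rpow (Rabs x) r)
      by (apply rpow_le_compat; auto; split; [apply Rabs_pos|lra]). lra.
Qed.

(* Apply the hypothesis at K = D / 8: since 8^s >= 8 the K^s term is absorbed,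
   and multiplying by K^(r-s) leaves 2 h K^r <= B. *)
Lemma rpow_le_of_split h D s r B : 0 < D -> 0 < h -> 1 <= s -> s <= r -> 0 <= B ->
  (forall K, 0 < K -> h / 2 * rpow D s <= 2 * h * rpow K s + rpow K (s - r) * B) ->
  h * rpow D r <= 4 * rpow 8 r * B.
Proof.
  intros HD Hh Hs Hsr HB H. set (K := D / 8).
  assert (HK : 0 < K) by (unfold K; lra).
  assert (HDK : D = 8 * K) by (unfold K; field).
  specialize (H K HK). rewrite HDK, !rpow_mult_distr in * by lra.
  assert (H8s : 8 <= rpow 8 s).
  { rewrite rpow_Rpower, <- (Rpower_1 8) at 1 by lra. apply Rle_Rpower; lra. }
  assert (Hsr1 : rpow K (s - r) * rpow K (r - s) = 1).
  { rewrite !rpow_Rpower, <- Rpower_plus, <- (Rpower_O K) by lra. f_equal. ring. }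
  assert (Hsr2 : rpow K s * rpow K (r - s) = rpow K r).
  { rewrite !rpow_Rpower, <- Rpower_plus by lra. f_equal. ring. }
  pose proof (rpow_ge0 K s). pose proof (rpow_ge0 K (r - s)). pose proof (rpow_ge0 8 r).
  assert (Hh2 : 2 * h * rpow K s <= rpow K (s - r) * B).
  { assert (h / 2 * (8 * rpow K s) <= h / 2 * (rpow 8 s * rpow K s)).
    { apply Rmult_le_compat_l; [lra|]. apply Rmult_le_compat_r; lra. }
    lra. }
  assert (2 * h * rpow K r <= B).
  { rewrite <- Hsr2.
    replace B with (rpow K (s - r) * B * rpow K (r - s))
      by (rewrite <- (Rmult_1_l B) at 2; rewrite <- Hsr1; ring).
    nra. }
  nra.
Qed.

(** * Quantile functions *)

Lemma qf_lub F t : is_cdf F -> 0 < t < 1 -> is_lub (fun x => F x <= t) (qf F t).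
Proof.
  intros [_ [_ [H0 H1]]] Ht.
  destruct (H1 (1 - t) ltac:(lra)) as [M HM]. destruct (H0 t ltac:(lra)) as [M' HM'].
  assert (Hb : bound (fun x => F x <= t)).
  { exists M. intros x Hx. destruct (Rle_lt_dec x M); [lra|]. pose proof (HM x ltac:(lra)). lra. }
  assert (Hne : exists x, F x <= t) by (exists (- M'); pose proof (HM' (- M') ltac:(lra)); lra).
  destruct (completeness _ Hb Hne) as [m Hm].
  unfold qf. apply epsilon_spec. exists m. exact Hm.
Qed.

Lemma qf_eq_lub F t m : is_lub (fun x => F x <= t) m -> qf F t = m.
Proof.
  intros Hm. assert (Hq : is_lub (fun x => F x <= t) (qf F t))
    by (unfold qf; apply epsilon_spec; exists m; exact Hm).
  destruct Hq as [Hq1 Hq2], Hm as [Hm1 Hm2]. apply Rle_antisym; auto.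
Qed.

Definition mono01 (phi : R -> R) := forall u v, 0 < u -> u <= v -> v < 1 -> phi u <= phi v.

Lemma qf_mono01 F : is_cdf F -> mono01 (qf F).
Proof.
  intros HF u v Hu Huv Hv.
  destruct (qf_lub F u HF ltac:(lra)) as [_ Hl]. destruct (qf_lub F v HF ltac:(lra)) as [Hu2 _].
  apply Hl. intros x Hx. apply Hu2. lra.
Qed.

Lemma cntle_ge_prefix x y : forall m j, (j <= m)%nat -> (forall i, (i < j)%nat -> x i <= y) ->
  INR j <= cntle x y m.
Proof.
  induction m as [|m IH]; intros j Hjm Hi; [replace j with 0%nat by lia; simpl; lra|].
  simpl. destruct (Nat.eq_dec j (S m)) as [->|Hne].
  - rewrite S_INR. assert (INR m <= cntle x y m) by (apply IH; auto; intros; apply Hi; lia).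
    destruct (Rle_dec (x m) y); [lra|]. exfalso. apply n, Hi. lia.
  - assert (INR j <= cntle x y m) by (apply IH; auto; lia).
    destruct (Rle_dec (x m) y); lra.
Qed.

Lemma cntle_le_n x y m : cntle x y m <= INR m.
Proof.
  induction m; [simpl; lra|]. rewrite S_INR. cbn [cntle]. destruct (Rle_dec (x m) y); lra.
Qed.

Lemma cntle_le_prefix x y : forall m j, (j <= m)%nat -> (forall i, (j <= i < m)%nat -> y < x i) ->
  cntle x y m <= INR j.
Proof.
  induction m as [|m IH]; intros j Hjm Hi; [replace j with 0%nat by lia; simpl; lra|].
  simpl. destruct (Nat.eq_dec j (S m)) as [->|Hne].
  - rewrite S_INR. pose proof (cntle_le_n x y m). destruct (Rle_dec (x m) y); lra.
  - assert (cntle x y m <= INR j) by (apply IH; [lia| intros; apply Hi; lia]).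
    destruct (Rle_dec (x m) y); [|lra]. pose proof (Hi m ltac:(lia)). lra.
Qed.

Lemma qf_emp_cdf n x k t : in_Xi n x -> (k < n)%nat ->
  INR k / INR n <= t < INR (S k) / INR n -> qf (emp_cdf n x) t = x k.
Proof.
  intros Hx Hk Ht.
  assert (Hnp : 0 < INR n) by (apply lt_0_INR; lia).
  assert (Htn : INR k <= t * INR n < INR (S k)).
  { destruct Ht as [Ht1 Ht2]. unfold Rdiv in *.
    apply Rmult_le_compat_r with (r := INR n) in Ht1; [|lra].
    apply Rmult_lt_compat_r with (r := INR n) in Ht2; [|lra].
    rewrite !Rmult_assoc, Rinv_l, !Rmult_1_r in * by lra. lra. }
  assert (Hcnt : forall y, emp_cdf n x y <= t <-> cntle x y n <= t * INR n).
  { intros y. unfold emp_cdf. split; intros H.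
    - apply Rmult_le_compat_r with (r := INR n) in H; [|lra].
      unfold Rdiv in H. rewrite Rmult_assoc, Rinv_l, Rmult_1_r in H by lra. exact H.
    - apply Rmult_le_reg_r with (INR n); [lra|]. unfold Rdiv.
      rewrite Rmult_assoc, Rinv_l, Rmult_1_r by lra. exact H. }
  apply qf_eq_lub. split.
  - intros y Hy. apply Hcnt in Hy. destruct (Rle_lt_dec y (x k)) as [|Hlt]; [auto|].
    assert (INR (S k) <= cntle x y n).
    { apply cntle_ge_prefix; [lia|]. intros i Hi. pose proof (Hx i k ltac:(lia) Hk). lra. }
    lra.
  - intros u Hu. destruct (Rle_lt_dec (x k) u) as [|Hlt]; [auto|].
    assert (Hy : emp_cdf n x ((u + x k) / 2) <= t).
    { apply Hcnt. assert (cntle x ((u + x k) / 2) n <= INR k); [|lra].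
      apply cntle_le_prefix; [lia|]. intros i Hi. pose proof (Hx k i ltac:(lia) ltac:(lia)). lra. }
    pose proof (Hu _ Hy). lra.
Qed.

Lemma grid_piece_exists n t : (1 <= n)%nat -> 0 <= t < 1 ->
  exists k, (k < n)%nat /\ INR k / INR n <= t < INR (S k) / INR n.
Proof.
  intros Hn Ht. assert (Hnp : 0 < INR n) by (apply lt_0_INR; lia).
  assert (Hfloor : forall m u, 0 <= u < INR m -> exists k, (k < m)%nat /\ INR k <= u < INR k + 1).
  { induction m as [|m IH]; intros u Hu; [simpl in Hu; lra|].
    rewrite S_INR in Hu. destruct (Rlt_le_dec u (INR m)).
    - destruct (IH u ltac:(lra)) as [k [Hk1 Hk2]]. exists k. split; [lia|auto].
    - exists m. split; [lia|lra]. }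
  destruct (Hfloor n (t * INR n)) as [k [Hk1 Hk2]]; [split; nra|].
  exists k. split; auto. rewrite S_INR. split.
  - apply Rmult_le_reg_r with (INR n); [lra|]. unfold Rdiv. rewrite Rmult_assoc, Rinv_l by lra. lra.
  - apply Rmult_lt_reg_r with (INR n); [lra|]. unfold Rdiv. rewrite Rmult_assoc, Rinv_l by lra. lra.
Qed.

Lemma RInt_const_R a b c : RInt (fun _ => c) a b = (b - a) * c.
Proof. rewrite RInt_const. reflexivity. Qed.

Lemma RInt_point_R f a : RInt f a a = 0.
Proof. exact (RInt_point a f). Qed.

Lemma RInt_Chasles_R f a b c : ex_RInt f a b -> ex_RInt f b c ->
  RInt f a b + RInt f b c = RInt f a c.
Proof. intros. rewrite <- (RInt_Chasles f a b c) by auto. reflexivity. Qed.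

Lemma RInt_le_const f a b c : a <= b -> ex_RInt f a b ->
  (forall t, a < t < b -> f t <= c) -> RInt f a b <= (b - a) * c.
Proof. intros. rewrite <- RInt_const_R. apply RInt_le; auto. apply ex_RInt_const. Qed.

Lemma RInt_ge_const f a b c : a <= b -> ex_RInt f a b ->
  (forall t, a < t < b -> c <= f t) -> (b - a) * c <= RInt f a b.
Proof. intros. rewrite <- RInt_const_R. apply RInt_le; auto. apply ex_RInt_const. Qed.

Lemma RInt_le_affine f (g : R -> R) a b c K : a <= b -> ex_RInt f a b -> ex_RInt g a b ->
  (forall t, a < t < b -> f t <= c + K * g t) -> RInt f a b <= (b - a) * c + K * RInt g a b.
Proof.
  intros Hab Hf Hg H.
  assert (Hcg : ex_RInt (fun t => c + K * g t) a b).
  { apply (ex_RInt_plus (V := R_NormedModule)); [apply ex_RInt_const|].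
    apply (ex_RInt_scal (V := R_NormedModule)). exact Hg. }
  eapply Rle_trans; [apply RInt_le; eauto|].
  rewrite (RInt_plus (V := R_CompleteNormedModule) (fun _ => c) (fun t => K * g t));
    [|apply ex_RInt_const|apply (ex_RInt_scal (V := R_NormedModule)); exact Hg].
  rewrite (RInt_scal (V := R_CompleteNormedModule) g) by exact Hg.
  rewrite RInt_const_R. right. reflexivity.
Qed.

Lemma ex_RInt_subinterval f a b c d : a <= c -> c <= d -> d <= b -> ex_RInt f a b -> ex_RInt f c d.
Proof.
  intros. apply (ex_RInt_Chasles_1 (V := R_CompleteNormedModule) f c d b); [lra|].
  apply (ex_RInt_Chasles_2 (V := R_CompleteNormedModule) f a c b); [lra|auto].
Qed.

Lemma RInt_outer_le f a b c d : a <= b -> b <= c -> c <= d -> ex_RInt f a d ->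
  (forall t, a < t < d -> 0 <= f t) -> RInt f a b + RInt f c d <= RInt f a d.
Proof.
  intros H1 H2 H3 Hf Hp.
  assert (E : forall u v, a <= u -> u <= v -> v <= d -> ex_RInt f u v)
    by (intros; apply (ex_RInt_subinterval f a d); auto).
  rewrite <- (RInt_Chasles_R f a b d), <- (RInt_Chasles_R f b c d) by (apply E; lra).
  assert (0 <= RInt f b c) by (apply RInt_ge_0; auto; intros; apply Hp; lra).
  lra.
Qed.

Lemma RInt_subinterval_le f a c d b : a <= c -> c <= d -> d <= b -> ex_RInt f a b ->
  (forall t, a < t < b -> 0 <= f t) -> RInt f c d <= RInt f a b.
Proof.
  intros H1 H2 H3 Hf Hp.
  assert (E : forall u v, a <= u -> u <= v -> v <= b -> ex_RInt f u v)
    by (intros; apply (ex_RInt_subinterval f a b); auto).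
  pose proof (RInt_outer_le f a c d b H1 H2 H3 Hf Hp).
  rewrite <- (RInt_Chasles_R f a c b), <- (RInt_Chasles_R f c d b) by (apply E; lra).
  assert (0 <= RInt f a c) by (apply RInt_ge_0; auto; [apply E; lra|intros; apply Hp; lra]).
  assert (0 <= RInt f d b) by (apply RInt_ge_0; auto; [apply E; lra|intros; apply Hp; lra]).
  lra.
Qed.

Definition refl01 (phi : R -> R) (t : R) : R := - phi (1 - t).

Lemma mono01_refl01 phi : mono01 phi -> mono01 (refl01 phi).
Proof. intros Hm u v Hu Huv Hv. unfold refl01. pose proof (Hm (1 - v) (1 - u)). lra. Qed.

Lemma RInt_refl f a b : ex_RInt f (1 - b) (1 - a) ->
  RInt (fun t => f (1 - t)) a b = RInt f (1 - b) (1 - a).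
Proof.
  intros H. apply ex_RInt_swap in H.
  pose proof (RInt_comp_lin f (-1) 1 a b) as Hc. pose proof (ex_RInt_comp_lin f (-1) 1 a b) as He.
  replace (-1 * a + 1) with (1 - a) in Hc, He by ring. replace (-1 * b + 1) with (1 - b) in Hc, He by ring.
  rewrite <- (opp_RInt_swap f _ _ H), <- (Hc H).
  transitivity (RInt (fun y => opp (scal (-1) (f (-1 * y + 1)))) a b).
  2: apply (RInt_opp (V := R_CompleteNormedModule)), He, H.
  apply RInt_ext. intros t _. cbn. unfold scal, opp; simpl; unfold mult; simpl.
  replace (-1 * t + 1) with (1 - t) by ring. ring.
Qed.

Fixpoint sum_upto (g : nat -> R) (m : nat) : R :=
  match m with O => 0 | S m' => sum_upto g m' + g m' end.

Lemma sum_upto_le g g' m : (forall k, (k < m)%nat -> g k <= g' k) -> sum_upto g m <= sum_upto g' m.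
Proof.
  induction m; intros H; simpl; [lra|].
  assert (sum_upto g m <= sum_upto g' m) by (apply IHm; intros; apply H; lia).
  pose proof (H m ltac:(lia)). lra.
Qed.

Lemma sum_upto_ext g g' m : (forall k, (k < m)%nat -> g k = g' k) -> sum_upto g m = sum_upto g' m.
Proof.
  intros H. apply Rle_antisym; apply sum_upto_le; intros k Hk; rewrite H by exact Hk; lra.
Qed.

Lemma sum_upto_plus g g' m : sum_upto (fun k => g k + g' k) m = sum_upto g m + sum_upto g' m.
Proof. induction m; simpl; [ring|]. rewrite IHm. ring. Qed.

Lemma sum_upto_scal g l m : sum_upto (fun k => l * g k) m = l * sum_upto g m.
Proof. induction m; simpl; [ring|]. rewrite IHm. ring. Qed.

Lemma sum_upto_telescope u m : sum_upto (fun k => u (S k) - u k) m = u m - u O.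
Proof. induction m; simpl; [ring|]. rewrite IHm. ring. Qed.

Lemma sum_upto_shift g m : sum_upto g (S m) = g O + sum_upto (fun k => g (S k)) m.
Proof. induction m; simpl in *; [ring|]. rewrite IHm. ring. Qed.

Lemma sum_upto_nonneg g m : (forall k, (k < m)%nat -> 0 <= g k) -> 0 <= sum_upto g m.
Proof.
  induction m; intros H; simpl; [lra|].
  assert (0 <= sum_upto g m) by (apply IHm; intros; apply H; lia). pose proof (H m ltac:(lia)). lra.
Qed.

Lemma sum_upto_term_le g m k : (forall i, (i < m)%nat -> 0 <= g i) -> (k < m)%nat ->
  g k <= sum_upto g m.
Proof.
  induction m; intros H Hk; [lia|]. simpl.
  destruct (Nat.eq_dec k m) as [->|Hne].
  - assert (0 <= sum_upto g m) by (apply sum_upto_nonneg; intros; apply H; lia). lra.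
  - assert (g k <= sum_upto g m) by (apply IHm; [intros; apply H; lia|lia]).
    pose proof (H m ltac:(lia)). lra.
Qed.

Lemma sum_upto_RInt f u m : (forall k, (k < m)%nat -> ex_RInt f (u k) (u (S k))) ->
  ex_RInt f (u O) (u m) /\ sum_upto (fun k => RInt f (u k) (u (S k))) m = RInt f (u O) (u m).
Proof.
  induction m; intros H.
  - simpl. split; [apply ex_RInt_point|]. rewrite RInt_point. reflexivity.
  - destruct IHm as [E1 E2]; [intros; apply H; lia|].
    pose proof (H m ltac:(lia)) as E3.
    split; [apply (ex_RInt_Chasles _ _ _ _ E1 E3)|].
    simpl. rewrite E2. apply RInt_Chasles_R; auto.
Qed.

Lemma grid_le n i j : (i <= j)%nat -> INR i / INR n <= INR j / INR n.
Proof.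
  intros. destruct n as [|n]; [simpl; unfold Rdiv; rewrite Rinv_0; lra|].
  assert (0 < INR (S n)) by (apply lt_0_INR; lia).
  apply Rmult_le_compat_r; [left; apply Rinv_0_lt_compat; lra|]. apply le_INR; auto.
Qed.

Lemma grid_pos n k : (1 <= n)%nat -> (1 <= k)%nat -> 0 < INR k / INR n.
Proof. intros. apply Rdiv_lt_0_compat; apply lt_0_INR; lia. Qed.

Lemma grid_lt1 n k : (k < n)%nat -> INR k / INR n < 1.
Proof.
  intros. assert (0 < INR n) by (apply lt_0_INR; lia).
  apply Rmult_lt_reg_r with (INR n); [lra|]. unfold Rdiv.
  rewrite Rmult_assoc, Rinv_l, Rmult_1_r, Rmult_1_l by lra. apply lt_INR; auto.
Qed.

Lemma grid_step n k : (1 <= n)%nat -> INR (S k) / INR n - INR k / INR n = / INR n.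
Proof. intros. assert (0 < INR n) by (apply lt_0_INR; lia). rewrite S_INR. field. lra. Qed.

Lemma grid_last n : (1 <= n)%nat -> INR (n - 1) / INR n = 1 - 1 / INR n.
Proof. intros. assert (0 < INR n) by (apply lt_0_INR; lia). rewrite minus_INR by lia. simpl. field. lra. Qed.

Lemma grid_n n : (1 <= n)%nat -> INR n / INR n = 1.
Proof. intros. assert (0 < INR n) by (apply lt_0_INR; lia). field. lra. Qed.

Lemma mono01_grid_le phi n i j : mono01 phi -> (1 <= i)%nat -> (i <= j)%nat -> (j < n)%nat ->
  phi (INR i / INR n) <= phi (INR j / INR n).
Proof. intros Hm Hi Hij Hj. apply Hm; [apply grid_pos; lia|apply grid_le; auto|apply grid_lt1; auto]. Qed.

Definition grid_clip (a b : R) (n k : nat) := Rmax a (Rmin b (INR k / INR n)).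

Lemma grid_clip_0 a b n : 0 <= a -> a <= b -> grid_clip a b n 0 = a.
Proof.
  intros. unfold grid_clip. simpl. unfold Rdiv. rewrite Rmult_0_l, Rmin_right by lra.
  apply Rmax_left; lra.
Qed.

Lemma grid_clip_n a b n : (1 <= n)%nat -> a <= b -> b <= 1 -> grid_clip a b n n = b.
Proof.
  intros. unfold grid_clip. rewrite grid_n, Rmin_left by (auto; lra). apply Rmax_right; lra.
Qed.

Lemma grid_clip_inner a b n k : a <= INR k / INR n <= b -> grid_clip a b n k = INR k / INR n.
Proof. intros. unfold grid_clip. rewrite Rmin_right by lra. apply Rmax_right; lra. Qed.

Lemma grid_clip_bounds a b n k : a <= b -> a <= grid_clip a b n k <= b.
Proof.
  intros. unfold grid_clip. split; [apply Rmax_l|]. apply Rmax_lub; [lra|apply Rmin_l].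
Qed.

Lemma grid_clip_piece a b n k : a <= b ->
  grid_clip a b n k = grid_clip a b n (S k) \/
  (INR k / INR n <= grid_clip a b n k /\ grid_clip a b n (S k) <= INR (S k) / INR n /\
   grid_clip a b n k <= grid_clip a b n (S k)).
Proof.
  intros Hab. unfold grid_clip. pose proof (grid_le n k (S k) ltac:(lia)).
  set (u := INR k / INR n) in *. set (v := INR (S k) / INR n) in *.
  destruct (Rle_lt_dec v a).
  - left. rewrite (Rmax_left a (Rmin b v)) by (pose proof (Rmin_r b v); lra).
    rewrite (Rmax_left a (Rmin b u)) by (pose proof (Rmin_r b u); lra). reflexivity.
  - destruct (Rle_lt_dec b u).
    + left. rewrite (Rmin_left b u), (Rmin_left b v) by lra. reflexivity.
    + right. rewrite (Rmin_right b u) by lra.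
      assert (Rmax a (Rmin b v) <= v) by (apply Rmax_lub; [lra|apply Rmin_r]).
      pose proof (Rmax_r a u). pose proof (Rmax_l a (Rmin b v)). pose proof (Rmin_r b v).
      assert (Rmax a u <= Rmax a (Rmin b v)).
      { apply Rmax_le_compat; [lra|]. unfold Rmin. destruct (Rle_dec b v); lra. }
      lra.
Qed.

Lemma grid_clip_mono a b n k : a <= b -> grid_clip a b n k <= grid_clip a b n (S k).
Proof. intros Hab. destruct (grid_clip_piece a b n k Hab) as [->|[_ [_ H]]]; lra. Qed.

Lemma grid_clip_in a b n k t : a <= b ->
  grid_clip a b n k < t < grid_clip a b n (S k) -> INR k / INR n < t < INR (S k) / INR n.
Proof. intros Hab Ht. destruct (grid_clip_piece a b n k Hab) as [E|[H1 [H2 _]]]; lra. Qed.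

Lemma RInt_grid_decomp n f (g : nat -> R -> R) a b : (1 <= n)%nat -> 0 < a -> a <= b -> b < 1 ->
  (forall k t, (k < n)%nat -> INR k / INR n < t < INR (S k) / INR n -> f t = g k t) ->
  (forall k u v, (k < n)%nat -> 0 < u -> u <= v -> v < 1 -> ex_RInt (g k) u v) ->
  ex_RInt f a b /\
  RInt f a b = sum_upto (fun k => RInt (g k) (grid_clip a b n k) (grid_clip a b n (S k))) n.
Proof.
  intros Hn Ha Hab Hb Hfg Hg.
  assert (Hp : forall k, (k < n)%nat ->
    ex_RInt f (grid_clip a b n k) (grid_clip a b n (S k)) /\
    RInt (g k) (grid_clip a b n k) (grid_clip a b n (S k)) =
    RInt f (grid_clip a b n k) (grid_clip a b n (S k))).
  { intros k Hk. pose proof (grid_clip_mono a b n k Hab).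
    pose proof (grid_clip_bounds a b n k Hab). pose proof (grid_clip_bounds a b n (S k) Hab).
    assert (Hext : forall x, Rmin (grid_clip a b n k) (grid_clip a b n (S k)) < x <
                             Rmax (grid_clip a b n k) (grid_clip a b n (S k)) -> g k x = f x).
    { intros x Hx. rewrite Rmin_left, Rmax_right in Hx by lra.
      symmetry. apply Hfg; auto. apply (grid_clip_in a b n k x Hab Hx). }
    split; [eapply ex_RInt_ext; [exact Hext|]; apply Hg; auto; lra|].
    apply RInt_ext. exact Hext. }
  destruct (sum_upto_RInt f (grid_clip a b n) n) as [E1 E2]; [intros k Hk; apply Hp; auto|].
  rewrite grid_clip_0, grid_clip_n in E1, E2 by (auto; lra).
  split; auto. rewrite <- E2. apply sum_upto_ext. intros k Hk. symmetry. apply Hp; auto.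
Qed.

Definition dev_pow (p : R) (phi : R -> R) (c t : R) : R := rpow (Rabs (c - phi t)) p.

(* |c - phi t|^p splits at phi t = c into a nonincreasing and a nondecreasing part. *)
Lemma ex_RInt_dev_pow phi c p a b : mono01 phi -> 0 <= p -> 0 < a -> a <= b -> b < 1 ->
  ex_RInt (dev_pow p phi c) a b.
Proof.
  intros Hm Hp Ha Hab Hb.
  assert (HA : ex_RInt (fun t => rpow (Rabs (c - Rmin (phi t) c)) p) a b).
  { apply ex_RInt_antimono; auto. intros u v h1 h2 h3.
    pose proof (Hm u v ltac:(lra) h2 ltac:(lra)).
    apply rpow_le_compat; auto. split; [apply Rabs_pos|].
    unfold Rmin. destruct (Rle_dec (phi u) c); destruct (Rle_dec (phi v) c);
      rewrite ?Rabs_right; lra. }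
  assert (HB : ex_RInt (fun t => rpow (Rabs (c - Rmax (phi t) c)) p) a b).
  { apply ex_RInt_mono; auto. intros u v h1 h2 h3.
    pose proof (Hm u v ltac:(lra) h2 ltac:(lra)).
    apply rpow_le_compat; auto. split; [apply Rabs_pos|].
    unfold Rmax. destruct (Rle_dec (phi u) c); destruct (Rle_dec (phi v) c);
      rewrite ?Rabs_left1, ?Rabs_right; lra. }
  eapply ex_RInt_ext; [|exact (ex_RInt_plus _ _ _ _ HA HB)].
  intros x _. cbn. unfold plus, dev_pow; simpl. unfold Rmin, Rmax.
  destruct (Rle_dec (phi x) c);
    replace (c - c) with 0 by ring; rewrite Rabs_R0, rpow_0_l; ring.
Qed.

Lemma ex_RInt_abs_pow phi p a b : mono01 phi -> 0 <= p -> 0 < a -> a <= b -> b < 1 ->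
  ex_RInt (fun t => rpow (Rabs (phi t)) p) a b.
Proof.
  intros. eapply ex_RInt_ext; [|apply (ex_RInt_dev_pow phi 0 p a b); auto].
  intros x _. unfold dev_pow. rewrite Rminus_0_l, Rabs_Ropp. reflexivity.
Qed.

Lemma RInt_dev_pow_refl01 phi c p a b : mono01 phi -> 0 <= p -> 0 < a -> a <= b -> b < 1 ->
  RInt (dev_pow p (refl01 phi) (- c)) a b = RInt (dev_pow p phi c) (1 - b) (1 - a).
Proof.
  intros. rewrite <- RInt_refl by (apply ex_RInt_dev_pow; auto; lra).
  apply RInt_ext. intros t _. unfold dev_pow, refl01.
  replace (- c - - phi (1 - t)) with (- (c - phi (1 - t))) by ring. rewrite Rabs_Ropp. reflexivity.
Qed.

Lemma RInt_abs_pow_refl01 phi p a b : mono01 phi -> 0 <= p -> 0 < a -> a <= b -> b < 1 ->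
  RInt (fun t => rpow (Rabs (refl01 phi t)) p) a b =
  RInt (fun t => rpow (Rabs (phi t)) p) (1 - b) (1 - a).
Proof.
  intros. rewrite <- RInt_refl by (apply ex_RInt_abs_pow; auto; lra).
  apply RInt_ext. intros t _. unfold refl01. rewrite Rabs_Ropp. reflexivity.
Qed.

Lemma int01_ub f I a b : int01 f I -> 0 < a -> a < b -> b < 1 -> ex_RInt f a b -> RInt f a b <= I.
Proof.
  intros [Hu _] Ha Hab Hb Hf. apply Hu. pose proof (ex_RInt_Reals_0 _ _ _ Hf) as pr.
  exists a, b, pr. repeat split; auto. apply RInt_Reals.
Qed.

Lemma int01_lub f I U : int01 f I ->
  (forall a b, 0 < a -> a < b -> b < 1 -> ex_RInt f a b -> RInt f a b <= U) -> I <= U.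
Proof.
  intros [_ Hl] H. apply Hl. intros v [a [b [pr [Ha [Hab [Hb ->]]]]]].
  rewrite <- RInt_Reals. apply H; auto. apply ex_RInt_Reals_1; auto.
Qed.

Lemma int01_approx f I e : int01 f I -> 0 < e ->
  exists a b, 0 < a /\ a < b /\ b < 1 /\ I - e < RInt f a b.
Proof.
  intros HI He. apply NNPP. intros Hn.
  assert (I <= I - e); [|lra].
  destruct HI as [_ Hl]. apply Hl. intros v [a [b [pr [Ha [Hab [Hb ->]]]]]].
  destruct (Rle_lt_dec (RiemannInt pr) (I - e)); auto. exfalso. apply Hn.
  exists a, b. repeat split; auto. rewrite RInt_Reals with (pr := pr). auto.
Qed.

Lemma int01_exists f U :
  (forall a b, 0 < a -> a <= b -> b < 1 -> ex_RInt f a b) ->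
  (forall a b, 0 < a -> a <= b -> b < 1 -> RInt f a b <= U) ->
  exists I, int01 f I /\ I <= U.
Proof.
  intros Hex Hb.
  assert (Hbd : bound (fun v => exists a b (pr : Riemann_integrable f a b),
                     0 < a /\ a < b /\ b < 1 /\ v = RiemannInt pr)).
  { exists U. intros v [a [b [pr [Ha [Hab [Hb' ->]]]]]]. rewrite <- RInt_Reals. apply Hb; lra. }
  assert (Hne : exists v, exists a b (pr : Riemann_integrable f a b),
                     0 < a /\ a < b /\ b < 1 /\ v = RiemannInt pr).
  { pose proof (ex_RInt_Reals_0 _ _ _ (Hex (1/4) (1/2) ltac:(lra) ltac:(lra) ltac:(lra))) as pr.
    exists (RiemannInt pr), (1/4), (1/2), pr. repeat split; lra. }
  destruct (completeness _ Hbd Hne) as [I HI].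
  exists I. split; [exact HI|]. apply (int01_lub f I U HI). intros; apply Hb; lra.
Qed.

Lemma int01_nonneg f I : int01 f I ->
  (forall a b, 0 < a -> a <= b -> b < 1 -> ex_RInt f a b) ->
  (forall t, 0 < t < 1 -> 0 <= f t) -> 0 <= I.
Proof.
  intros HI Hex Hp. apply Rle_trans with (RInt f (1/4) (1/2)).
  - apply RInt_ge_0; [lra|apply Hex; lra|]. intros; apply Hp; lra.
  - apply int01_ub; auto; try lra. apply Hex; lra.
Qed.

(** * Monotone functions with integrable r-th power *)

Definition mono_Lr (r : R) (phi : R -> R) (I : R) : Prop :=
  mono01 phi /\
  (forall a b, 0 < a -> a <= b -> b < 1 -> RInt (fun t => rpow (Rabs (phi t)) r) a b <= I) /\
  (forall e, 0 < e -> exists a0 b0, 0 < a0 /\ a0 <= b0 /\ b0 < 1 /\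
      I - e <= RInt (fun t => rpow (Rabs (phi t)) r) a0 b0).

Lemma mono_Lr_qf F r : 0 <= r -> is_cdf F -> in_Pr r F -> exists I, mono_Lr r (qf F) I.
Proof.
  intros Hr HF [I HI]. exists I.
  pose proof (qf_mono01 F HF) as Hm.
  assert (Hex : forall a b, 0 < a -> a <= b -> b < 1 ->
             ex_RInt (fun t => rpow (Rabs (qf F t)) r) a b) by (intros; apply ex_RInt_abs_pow; auto).
  assert (HI0 : 0 <= I) by (apply (int01_nonneg _ I HI Hex); intros; apply rpow_ge0).
  split; [exact Hm|]. split.
  - intros a b Ha Hab Hb. destruct (Req_dec a b) as [<-|Hne].
    + rewrite RInt_point. exact HI0.
    + apply int01_ub; auto; lra.
  - intros e He. destruct (int01_approx _ I e HI He) as [a [b [Ha [Hab [Hb H]]]]].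
    exists a, b. repeat split; auto; lra.
Qed.

Lemma mono_Lr_refl01 r phi I : 0 <= r -> mono_Lr r phi I -> mono_Lr r (refl01 phi) I.
Proof.
  intros Hr [Hm [HI Ha]]. split; [apply mono01_refl01; auto|]. split.
  - intros a b Ha0 Hab Hb. rewrite RInt_abs_pow_refl01 by auto. apply HI; lra.
  - intros e He. destruct (Ha e He) as [a0 [b0 [H1 [H2 [H3 H4]]]]].
    exists (1 - b0), (1 - a0). repeat split; try lra.
    rewrite RInt_abs_pow_refl01 by (auto; lra). replace (1 - (1 - a0)) with a0 by ring.
    replace (1 - (1 - b0)) with b0 by ring. exact H4.
Qed.

Section Mono_Lr.
Variables (r I : R) (phi : R -> R).
Hypothesis Hr : 0 <= r.
Hypothesis Hphi : mono_Lr r phi I.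

Lemma mono_Lr_tail_left e : 0 < e -> exists d, 0 < d <= 1/4 /\
  forall a c, 0 < a -> a <= c -> c <= d -> RInt (fun t => rpow (Rabs (phi t)) r) a c <= e.
Proof.
  intros He. destruct Hphi as [Hm [HI Ha]]. destruct (Ha e He) as [a0 [b0 [H1 [H2 [H3 H4]]]]].
  exists (Rmin a0 (1/4)). split; [split; [apply Rmin_glb_lt; lra|apply Rmin_r]|].
  intros a c Ha' Hac Hcd. pose proof (Rmin_l a0 (1/4)).
  pose proof (RInt_outer_le (fun t => rpow (Rabs (phi t)) r) a c a0 b0 Hac ltac:(lra) H2
    ltac:(apply ex_RInt_abs_pow; auto; lra) ltac:(intros; apply rpow_ge0)).
  pose proof (HI a b0 Ha' ltac:(lra) H3). lra.
Qed.

(* Since |phi|^r is at least |phi h|^r minus |phi (1/2)|^r on [h/2, h],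
   h |phi h|^r is controlled by the integral of |phi|^r near 0. *)
Lemma mono_Lr_edge_left e : 0 < e -> exists h0, 0 < h0 <= 1/4 /\
  forall h, 0 < h <= h0 -> h * rpow (Rabs (phi h)) r <= e.
Proof.
  intros He. destruct (mono_Lr_tail_left (e / 4) ltac:(lra)) as [d [Hd Hint]].
  destruct Hphi as [Hm _].
  set (K := rpow (Rabs (phi (1/2))) r). assert (HK : 0 <= K) by apply rpow_ge0.
  set (h0 := Rmin d (e / (2 * (K + 1)))).
  assert (Hh0 : 0 < h0 <= d /\ h0 * (K + 1) <= e / 2).
  { unfold h0. pose proof (Rmin_l d (e / (2 * (K + 1)))). pose proof (Rmin_r d (e / (2 * (K + 1)))).
    split; [split; [apply Rmin_glb_lt; [lra|apply Rdiv_lt_0_compat; lra]|lra]|].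
    apply Rle_trans with (e / (2 * (K + 1)) * (K + 1)); [apply Rmult_le_compat_r; lra|].
    right. field. lra. }
  exists h0. split; [lra|]. intros h Hh.
  assert (H1 : (h - h/2) * rpow (Rabs (phi h)) r <=
               (h - h / 2) * K + 1 * RInt (fun t => rpow (Rabs (phi t)) r) (h/2) h).
  { rewrite <- RInt_const_R.
    apply RInt_le_affine; [lra|apply ex_RInt_const|apply ex_RInt_abs_pow; auto; lra|].
    intros t Ht. unfold K. rewrite Rmult_1_l, Rplus_comm.
    apply rpow_abs_between; auto; apply Hm; lra. }
  pose proof (Hint (h/2) h ltac:(lra) ltac:(lra) ltac:(lra)).
  assert (h * K <= e / 2) by nra.
  lra.
Qed.

End Mono_Lr.

Lemma mono_Lr_tail_right r I phi e : 0 <= r -> mono_Lr r phi I -> 0 < e -> exists d, 0 < d <= 1/4 /\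
  forall c b, 1 - d <= c -> c <= b -> b < 1 -> RInt (fun t => rpow (Rabs (phi t)) r) c b <= e.
Proof.
  intros Hr Hphi He. pose proof (proj1 Hphi) as Hm.
  destruct (mono_Lr_tail_left r I (refl01 phi) Hr (mono_Lr_refl01 r phi I Hr Hphi) e He)
    as [d [Hd H]].
  exists d. split; auto. intros c b Hc Hcb Hb.
  specialize (H (1 - b) (1 - c) ltac:(lra) ltac:(lra) ltac:(lra)).
  rewrite RInt_abs_pow_refl01 in H by (auto; lra).
  replace (1 - (1 - c)) with c in H by ring. replace (1 - (1 - b)) with b in H by ring. exact H.
Qed.

Lemma mono_Lr_edge_right r I phi e : 0 <= r -> mono_Lr r phi I -> 0 < e -> exists h0, 0 < h0 <= 1/4 /\
  forall h, 0 < h <= h0 -> h * rpow (Rabs (phi (1 - h))) r <= e.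
Proof.
  intros Hr Hphi He.
  destruct (mono_Lr_edge_left r I (refl01 phi) Hr (mono_Lr_refl01 r phi I Hr Hphi) e He)
    as [h0 [Hh0 H]].
  exists h0. split; auto. intros h Hh. specialize (H h Hh). unfold refl01 in H.
  rewrite Rabs_Ropp in H. exact H.
Qed.

Lemma RInt_dev_pow_le phi c r u v : mono01 phi -> 0 <= r -> 0 < u -> u <= v -> v < 1 ->
  RInt (dev_pow r phi c) u v <=
  rpow 2 r * ((v - u) * rpow (Rabs c) r + RInt (fun t => rpow (Rabs (phi t)) r) u v).
Proof.
  intros Hm Hr Hu Huv Hv. rewrite Rmult_plus_distr_l, <- Rmult_assoc, (Rmult_comm (rpow 2 r)), Rmult_assoc.
  apply RInt_le_affine; [lra|apply ex_RInt_dev_pow; auto|apply ex_RInt_abs_pow; auto|].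
  intros t Ht. rewrite <- Rmult_plus_distr_l. apply rpow_abs_diff_le; auto.
Qed.

Lemma RInt_dev_pow_split phi c s r K u v : mono01 phi -> 0 < s -> s <= r -> 0 < K ->
  0 < u -> u <= v -> v < 1 ->
  RInt (dev_pow s phi c) u v <= (v - u) * rpow K s + rpow K (s - r) * RInt (dev_pow r phi c) u v.
Proof.
  intros Hm Hs Hsr HK Hu Huv Hv.
  apply RInt_le_affine; auto; try (apply ex_RInt_dev_pow; auto; lra).
  intros t Ht. apply rpow_le_split; auto. apply Rabs_pos.
Qed.

(** * The integrand of [d_p] for an empirical measure *)

Definition emp_gap_pow (F : R -> R) (n : nat) (x : nat -> R) (p t : R) : R :=
  rpow (Rabs (qf (emp_cdf n x) t - qf F t)) p.

Lemma emp_gap_pow_piece F n x p k t : in_Xi n x -> (k < n)%nat ->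
  INR k / INR n <= t < INR (S k) / INR n -> emp_gap_pow F n x p t = dev_pow p (qf F) (x k) t.
Proof. intros. unfold emp_gap_pow, dev_pow. rewrite (qf_emp_cdf n x k t); auto. Qed.

Lemma RInt_emp_gap_pow_decomp F n x p a b : is_cdf F -> 0 <= p -> (1 <= n)%nat -> in_Xi n x ->
  0 < a -> a <= b -> b < 1 ->
  ex_RInt (emp_gap_pow F n x p) a b /\
  RInt (emp_gap_pow F n x p) a b =
    sum_upto (fun k => RInt (dev_pow p (qf F) (x k)) (grid_clip a b n k) (grid_clip a b n (S k))) n.
Proof.
  intros HF Hp Hn Hx Ha Hab Hb. apply RInt_grid_decomp; auto.
  - intros k t Hk Ht. apply emp_gap_pow_piece; auto. lra.
  - intros k u v Hk Hu Huv Hv. apply ex_RInt_dev_pow; auto. apply qf_mono01; auto.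
Qed.

Lemma ex_RInt_emp_gap_pow F n x p a b : is_cdf F -> 0 <= p -> (1 <= n)%nat -> in_Xi n x ->
  0 < a -> a <= b -> b < 1 -> ex_RInt (emp_gap_pow F n x p) a b.
Proof. intros. apply RInt_emp_gap_pow_decomp; auto. Qed.

(* On each piece |x k - q t|^p <= 2^p (Y^p + 1 + |q t|^r) with Y = sum |x k|. *)
Lemma RInt_emp_gap_pow_bounded F r p n x I : is_cdf F -> 0 <= p -> p <= r -> mono_Lr r (qf F) I ->
  (1 <= n)%nat -> in_Xi n x ->
  exists U, forall a b, 0 < a -> a <= b -> b < 1 -> RInt (emp_gap_pow F n x p) a b <= U.
Proof.
  intros HF Hp Hpr [Hm [HI _]] Hn Hx.
  set (Y := sum_upto (fun k => Rabs (x k)) n).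
  assert (HY : 0 <= Y) by (apply sum_upto_nonneg; intros; apply Rabs_pos).
  set (C := rpow 2 p * (rpow Y p + 1)).
  assert (HC : 0 <= C) by (unfold C; pose proof (rpow_ge0 2 p); pose proof (rpow_ge0 Y p); nra).
  assert (HI0 : 0 <= I).
  { pose proof (HI (1/2) (1/2) ltac:(lra) ltac:(lra) ltac:(lra)) as H. rewrite RInt_point in H. exact H. }
  exists (C + rpow 2 p * I). intros a b Ha Hab Hb.
  eapply Rle_trans.
  - apply (RInt_le_affine _ (fun t => rpow (Rabs (qf F t)) r) a b C (rpow 2 p)); auto.
    + apply ex_RInt_emp_gap_pow; auto; lra.
    + apply ex_RInt_abs_pow; auto; lra.
    + intros t Ht. destruct (grid_piece_exists n t Hn ltac:(lra)) as [k [Hk Hkt]].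
      rewrite (emp_gap_pow_piece F n x p k t) by auto. unfold dev_pow.
      assert (Hxk : Rabs (x k) <= Y).
      { apply (sum_upto_term_le (fun k => Rabs (x k))); auto. intros; apply Rabs_pos. }
      assert (H1 : rpow (Rabs (x k - qf F t)) p <= rpow (Y + Rabs (qf F t)) p).
      { apply rpow_le_compat; [lra|]. split; [apply Rabs_pos|].
        pose proof (Rabs_triang (x k) (- qf F t)). rewrite Rabs_Ropp in *. unfold Rminus. lra. }
      pose proof (rpow_plus_le Y (Rabs (qf F t)) p ltac:(lra) HY (Rabs_pos _)).
      pose proof (rpow_le_1_plus (Rabs (qf F t)) p r (Rabs_pos _) ltac:(lra) Hpr).
      pose proof (rpow_ge0 2 p). unfold C. nra.
  - pose proof (HI a b Ha Hab Hb). pose proof (rpow_ge0 2 p).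
    assert (0 <= (1 - (b - a)) * C) by (apply Rmult_le_pos; lra).
    assert (rpow 2 p * RInt (fun t => rpow (Rabs (qf F t)) r) a b <= rpow 2 p * I)
      by (apply Rmult_le_compat_l; lra).
    lra.
Qed.

Lemma int01_emp_gap_pow_exists F r p n x I : is_cdf F -> 0 <= p -> p <= r ->
  mono_Lr r (qf F) I -> (1 <= n)%nat -> in_Xi n x -> exists J, int01 (emp_gap_pow F n x p) J.
Proof.
  intros. destruct (RInt_emp_gap_pow_bounded F r p n x I) as [U HU]; auto.
  destruct (int01_exists (emp_gap_pow F n x p) U) as [J [HJ _]]; eauto.
  intros. apply ex_RInt_emp_gap_pow; auto; lra.
Qed.

Lemma dist_r_emp_cvg_0 F r I (x : nat -> nat -> R) :
  is_cdf F -> 1 <= r -> mono_Lr r (qf F) I -> (forall n, (1 <= n)%nat -> in_Xi n (x n)) ->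
  (forall e, 0 < e -> exists N, forall n, (N <= n)%nat -> (1 <= n)%nat ->
      forall a b, 0 < a -> a <= b -> b < 1 -> RInt (emp_gap_pow F n (x n) r) a b <= e) ->
  exists D : nat -> R,
    (forall n, (1 <= n)%nat -> dist_r r (emp_cdf n (x n)) F (D n)) /\ Un_cv D 0.
Proof.
  intros HF Hr Hq Hx Hcvg.
  set (D := fun n => epsilon (inhabits 0) (dist_r r (emp_cdf n (x n)) F)).
  assert (HD : forall n, (1 <= n)%nat -> dist_r r (emp_cdf n (x n)) F (D n)).
  { intros n Hn. unfold D. apply epsilon_spec.
    destruct (int01_emp_gap_pow_exists F r r n (x n) I) as [J HJ]; auto; try lra.
    exists (rpow J (/ r)), J. auto. }
  exists D. split; auto.
  intros e He. set (e' := rpow (e / 2) r).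
  destruct (Hcvg e' ltac:(apply rpow_gt0; lra)) as [N HN].
  exists (Nat.max N 1). intros n Hn.
  destruct (HD n ltac:(lia)) as [J [HJ ->]].
  assert (HJe : J <= e').
  { apply (int01_lub _ J e' HJ). intros a b Ha Hab Hb _. apply HN; auto; lia || lra. }
  unfold R_dist. rewrite Rminus_0_r, Rabs_right by (apply Rle_ge, rpow_ge0).
  assert (rpow J (/ r) <= rpow e' (/ r)).
  { apply rpow_le_compat; [left; apply Rinv_0_lt_compat; lra|]. split; [|lra].
    apply (int01_nonneg _ J HJ); [|intros; apply rpow_ge0].
    intros a b Ha Hab Hb. apply ex_RInt_emp_gap_pow; auto; try lra; [lia|apply Hx; lia]. }
  unfold e' in H. rewrite rpow_rpow_inv in H by lra. lra.
Qed.

(** * Quantizers bracketed by the quantiles of the grid *)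

Definition bracketed (phi : R -> R) (n : nat) (x : nat -> R) : Prop :=
  forall k, (1 <= k)%nat -> (k <= n - 2)%nat ->
    phi (INR k / INR n) <= x k <= phi (INR (S k) / INR n).

Definition low_part (M r y : R) : R := if Rlt_dec y (- M) then rpow (Rabs y) r else 0.
Definition high_part (M r y : R) : R := if Rlt_dec M y then rpow (Rabs y) r else 0.

Lemma low_part_le M r y : 0 <= low_part M r y <= rpow (Rabs y) r.
Proof. unfold low_part. pose proof (rpow_ge0 (Rabs y) r). destruct (Rlt_dec y (- M)); lra. Qed.

Lemma high_part_le M r y : 0 <= high_part M r y <= rpow (Rabs y) r.
Proof. unfold high_part. pose proof (rpow_ge0 (Rabs y) r). destruct (Rlt_dec M y); lra. Qed.

(* Between -M and M use (be - al)^(r-1) <= (2M)^(r-1); otherwise an endpoint is large. *)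
Lemma rpow_osc_le al be M r : al <= be -> 1 <= M -> 1 <= r ->
  rpow (be - al) r <=
  rpow (2 * M) (r - 1) * (be - al) + rpow 2 r * (low_part M r al + high_part M r be).
Proof.
  intros Hab HM Hr. unfold low_part, high_part.
  pose proof (rpow_ge0 2 r). pose proof (rpow_ge0 (2 * M) (r - 1)).
  pose proof (rpow_ge0 (Rabs al) r). pose proof (rpow_ge0 (Rabs be) r).
  assert (Hdiff : forall y, 0 <= y -> be - al <= 2 * y -> rpow (be - al) r <= rpow 2 r * rpow y r).
  { intros y Hy Hle. rewrite <- rpow_mult_distr by lra. apply rpow_le_compat; lra. }
  destruct (Rlt_dec al (- M)); destruct (Rlt_dec M be).
  - assert (rpow (be - al) r <= rpow (Rabs al + Rabs be) r).
    { apply rpow_le_compat; [lra|]. rewrite (Rabs_left al), (Rabs_right be) by lra. lra. }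
    pose proof (rpow_plus_le (Rabs al) (Rabs be) r ltac:(lra) (Rabs_pos _) (Rabs_pos _)). nra.
  - assert (rpow (be - al) r <= rpow 2 r * rpow (Rabs al) r)
      by (apply Hdiff; [apply Rabs_pos|rewrite Rabs_left by lra; lra]). nra.
  - assert (rpow (be - al) r <= rpow 2 r * rpow (Rabs be) r)
      by (apply Hdiff; [apply Rabs_pos|rewrite Rabs_right by lra; lra]). nra.
  - destruct (Req_dec (be - al) 0) as [Hz|Hz]; [rewrite Hz, rpow_0_l; nra|].
    destruct (Req_dec r 1) as [->|Hr1].
    + rewrite rpow_1, Rminus_diag, rpow_Rpower, Rpower_O by lra. nra.
    + replace r with ((r - 1) + 1) at 1 by ring. rewrite rpow_plus, rpow_1 by lra.
      assert (rpow (be - al) (r - 1) <= rpow (2 * M) (r - 1)) by (apply rpow_le_compat; lra).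
      nra.
Qed.

Lemma ex_RInt_low_part phi M r a b : mono01 phi -> 0 <= M -> 0 <= r -> 0 < a -> a <= b -> b < 1 ->
  ex_RInt (fun t => low_part M r (phi t)) a b.
Proof.
  intros Hm HM Hr Ha Hab Hb. apply ex_RInt_antimono; auto. intros u v h1 h2 h3.
  pose proof (Hm u v ltac:(lra) h2 ltac:(lra)). unfold low_part.
  destruct (Rlt_dec (phi u) (-M)); destruct (Rlt_dec (phi v) (-M)); try lra.
  - apply rpow_le_compat; auto. rewrite !Rabs_left by lra. lra.
  - apply rpow_ge0.
Qed.

Lemma ex_RInt_high_part phi M r a b : mono01 phi -> 0 <= M -> 0 <= r -> 0 < a -> a <= b -> b < 1 ->
  ex_RInt (fun t => high_part M r (phi t)) a b.
Proof.
  intros Hm HM Hr Ha Hab Hb. apply ex_RInt_mono; auto. intros u v h1 h2 h3.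
  pose proof (Hm u v ltac:(lra) h2 ltac:(lra)). unfold high_part.
  destruct (Rlt_dec M (phi u)); destruct (Rlt_dec M (phi v)); try lra.
  - apply rpow_le_compat; auto. rewrite !Rabs_right by lra. lra.
  - apply rpow_ge0.
Qed.

Lemma RInt_low_part_ge phi M r u v : mono01 phi -> 0 <= M -> 0 <= r -> 0 < u -> u <= v -> v < 1 ->
  (v - u) * low_part M r (phi v) <= RInt (fun t => low_part M r (phi t)) u v.
Proof.
  intros Hm HM Hr Hu Huv Hv. apply RInt_ge_const; [lra|apply ex_RInt_low_part; auto; lra|].
  intros t Ht. assert (phi t <= phi v) by (apply Hm; lra). unfold low_part.
  destruct (Rlt_dec (phi v) (- M)); [|apply low_part_le].
  destruct (Rlt_dec (phi t) (- M)); [|lra]. apply rpow_le_compat; [lra|].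
  rewrite !Rabs_left by lra. lra.
Qed.

Lemma RInt_high_part_ge phi M r u v : mono01 phi -> 0 <= M -> 0 <= r -> 0 < u -> u <= v -> v < 1 ->
  (v - u) * high_part M r (phi u) <= RInt (fun t => high_part M r (phi t)) u v.
Proof.
  intros Hm HM Hr Hu Huv Hv. apply RInt_ge_const; [lra|apply ex_RInt_high_part; auto; lra|].
  intros t Ht. assert (phi u <= phi t) by (apply Hm; lra). unfold high_part.
  destruct (Rlt_dec M (phi u)); [|apply high_part_le].
  destruct (Rlt_dec M (phi t)); [|lra]. apply rpow_le_compat; [lra|].
  rewrite !Rabs_right by lra. lra.
Qed.

(* [low_part M r (phi t)] vanishes beyond any point d with |phi d| <= M. *)
Lemma RInt_low_part_le phi M r a d c : mono01 phi -> 0 <= r -> 0 < a -> a <= d -> d <= c -> c < 1 ->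
  Rabs (phi d) <= M ->
  RInt (fun t => low_part M r (phi t)) a c <= RInt (fun t => rpow (Rabs (phi t)) r) a d.
Proof.
  intros Hm Hr Ha Had Hdc Hc HMd. assert (HM : 0 <= M) by (pose proof (Rabs_pos (phi d)); lra).
  assert (Hex : forall u v, a <= u -> u <= v -> v <= c -> ex_RInt (fun t => low_part M r (phi t)) u v)
    by (intros; apply ex_RInt_low_part; auto; lra).
  rewrite <- (RInt_Chasles_R _ a d c) by (apply Hex; lra).
  assert (RInt (fun t => low_part M r (phi t)) d c <= (c - d) * 0).
  { apply RInt_le_const; [lra|apply Hex; lra|]. intros t Ht. unfold low_part.
    assert (phi d <= phi t) by (apply Hm; lra).
    destruct (Rlt_dec (phi t) (- M)); [|lra]. unfold Rabs in HMd. destruct (Rcase_abs (phi d)); lra. }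
  assert (RInt (fun t => low_part M r (phi t)) a d <= RInt (fun t => rpow (Rabs (phi t)) r) a d).
  { apply RInt_le; [lra|apply Hex; lra|apply ex_RInt_abs_pow; auto; lra|]. intros; apply low_part_le. }
  lra.
Qed.

Lemma RInt_high_part_le phi M r a d c : mono01 phi -> 0 <= r -> 0 < a -> a <= d -> d <= c -> c < 1 ->
  Rabs (phi d) <= M ->
  RInt (fun t => high_part M r (phi t)) a c <= RInt (fun t => rpow (Rabs (phi t)) r) d c.
Proof.
  intros Hm Hr Ha Had Hdc Hc HMd. assert (HM : 0 <= M) by (pose proof (Rabs_pos (phi d)); lra).
  assert (Hex : forall u v, a <= u -> u <= v -> v <= c -> ex_RInt (fun t => high_part M r (phi t)) u v)
    by (intros; apply ex_RInt_high_part; auto; lra).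
  rewrite <- (RInt_Chasles_R _ a d c) by (apply Hex; lra).
  assert (RInt (fun t => high_part M r (phi t)) a d <= (d - a) * 0).
  { apply RInt_le_const; [lra|apply Hex; lra|]. intros t Ht. unfold high_part.
    assert (phi t <= phi d) by (apply Hm; lra).
    destruct (Rlt_dec M (phi t)); [|lra]. unfold Rabs in HMd. destruct (Rcase_abs (phi d)); lra. }
  assert (RInt (fun t => high_part M r (phi t)) d c <= RInt (fun t => rpow (Rabs (phi t)) r) d c).
  { apply RInt_le; [lra|apply Hex; lra|apply ex_RInt_abs_pow; auto; lra|]. intros; apply high_part_le. }
  lra.
Qed.

Section Interior.
Variables (phi : R -> R) (r M d : R) (n : nat) (x : nat -> R).
Hypothesis Hm : mono01 phi.
Hypothesis Hr : 1 <= r.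
Hypothesis Hn : (4 <= n)%nat.
Hypothesis Hx : bracketed phi n x.
Hypothesis HM : 1 <= M.
Hypothesis Hd : 1 / INR n <= d <= 1/4.
Hypothesis HMd : Rabs (phi d) <= M.
Hypothesis HM1d : Rabs (phi (1 - d)) <= M.

Let h := / INR n.
Let al k := phi (INR k / INR n).

Lemma INR_n_ge4 : 4 <= INR n.
Proof. apply (le_INR 4) in Hn. simpl in Hn. lra. Qed.

Lemma interior_piece_le k a b : 0 < a -> a <= b -> b < 1 -> (1 <= k)%nat -> (k <= n - 2)%nat ->
  RInt (dev_pow r phi (x k)) (grid_clip a b n k) (grid_clip a b n (S k)) <=
  h * rpow (al (S k) - al k) r.
Proof.
  intros Ha Hab Hb Hk1 Hk2. pose proof (grid_step n k ltac:(lia)) as Hstep.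
  pose proof (grid_clip_bounds a b n k Hab). pose proof (grid_clip_bounds a b n (S k) Hab).
  pose proof (rpow_ge0 (al (S k) - al k) r).
  assert (Hh : 0 <= h) by (left; apply Rinv_0_lt_compat; pose proof INR_n_ge4; lra).
  destruct (grid_clip_piece a b n k Hab) as [He|[Hc1 [Hc2 Hc3]]].
  { rewrite He, RInt_point. apply Rmult_le_pos; auto. }
  eapply Rle_trans; [apply (RInt_le_const _ _ _ (rpow (al (S k) - al k) r)); auto;
    [apply ex_RInt_dev_pow; auto; lra|]|].
  - intros t Ht. unfold dev_pow. apply rpow_le_compat; [lra|]. split; [apply Rabs_pos|].
    pose proof (grid_pos n k ltac:(lia) Hk1). pose proof (grid_lt1 n (S k) ltac:(lia)).
    assert (al k <= phi t) by (apply Hm; lra). assert (phi t <= al (S k)) by (apply Hm; lra).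
    pose proof (Hx k Hk1 Hk2). unfold al in *. unfold Rabs. destruct (Rcase_abs _); lra.
  - unfold h. apply Rmult_le_compat_r; lra.
Qed.

Lemma low_part_sum_le :
  sum_upto (fun k => h * low_part M r (al (S k))) (n - 2) <=
  h * rpow (Rabs (al 1)) r + RInt (fun t => rpow (Rabs (phi t)) r) (1 / INR n) d.
Proof.
  pose proof INR_n_ge4. assert (Hh : 0 < h) by (apply Rinv_0_lt_compat; lra).
  replace (n - 2)%nat with (S (n - 3)) by lia. rewrite sum_upto_shift.
  assert (Hfirst : h * low_part M r (al 1) <= h * rpow (Rabs (al 1)) r)
    by (apply Rmult_le_compat_l; [lra|apply low_part_le]).
  destruct (sum_upto_RInt (fun t => low_part M r (phi t)) (fun k => INR (S k) / INR n) (n - 3))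
    as [_ Hs];
    [intros; apply ex_RInt_low_part; auto; try lra; [apply grid_pos|apply grid_le|apply grid_lt1]; lia|].
  assert (Hpieces : sum_upto (fun k => h * low_part M r (al (S (S k)))) (n - 3) <=
                    RInt (fun t => low_part M r (phi t)) (INR 1 / INR n) (INR (S (n - 3)) / INR n)).
  { rewrite <- Hs. apply sum_upto_le. intros k Hk.
    unfold h. rewrite <- (grid_step n (S k)) by lia.
    apply RInt_low_part_ge; auto; try lra; [apply grid_pos|apply grid_le|apply grid_lt1]; lia. }
  pose proof (RInt_low_part_le phi M r (INR 1 / INR n) d (INR (S (n - 3)) / INR n) Hm ltac:(lra)
    ltac:(apply grid_pos; lia) ltac:(simpl; lra)).
  assert (d <= INR (S (n - 3)) / INR n < 1).
  { split; [|apply grid_lt1; lia]. replace (S (n - 3)) with (n - 2)%nat by lia.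
    rewrite minus_INR by lia. apply Rmult_le_reg_r with (INR n); [lra|]. simpl; field_simplify; nra. }
  change (INR 1) with 1 in *. lra.
Qed.

Lemma high_part_sum_le :
  sum_upto (fun k => h * high_part M r (al (S (S k)))) (n - 2) <=
  h * rpow (Rabs (al (n - 1))) r + RInt (fun t => rpow (Rabs (phi t)) r) (1 - d) (INR (n - 1) / INR n).
Proof.
  pose proof INR_n_ge4. assert (Hh : 0 < h) by (apply Rinv_0_lt_compat; lra).
  replace (n - 2)%nat with (S (n - 3)) by lia. cbn [sum_upto].
  replace (S (S (n - 3))) with (n - 1)%nat by lia.
  assert (Hlast : h * high_part M r (al (n - 1)) <= h * rpow (Rabs (al (n - 1))) r)
    by (apply Rmult_le_compat_l; [lra|apply high_part_le]).
  destruct (sum_upto_RInt (fun t => high_part M r (phi t)) (fun k => INR (S (S k)) / INR n) (n - 3))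
    as [_ Hs];
    [intros; apply ex_RInt_high_part; auto; try lra; [apply grid_pos|apply grid_le|apply grid_lt1]; lia|].
  replace (S (S (n - 3))) with (n - 1)%nat in Hs by lia.
  assert (Hpieces : sum_upto (fun k => h * high_part M r (al (S (S k)))) (n - 3) <=
                    RInt (fun t => high_part M r (phi t)) (INR 2 / INR n) (INR (n - 1) / INR n)).
  { rewrite <- Hs. apply sum_upto_le. intros k Hk.
    unfold h. rewrite <- (grid_step n (S (S k))) by lia.
    apply RInt_high_part_ge; auto; try lra; [apply grid_pos|apply grid_le|apply grid_lt1]; lia. }
  assert (Hd2 : INR 2 / INR n <= 1 - d)
    by (apply Rmult_le_reg_r with (INR n); [lra|]; simpl; field_simplify; nra).
  assert (1 - d <= INR (n - 1) / INR n < 1).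
  { rewrite grid_last by lia. assert (0 < 1 / INR n) by (apply Rdiv_lt_0_compat; lra). lra. }
  pose proof (RInt_high_part_le phi M r (INR 2 / INR n) (1 - d) (INR (n - 1) / INR n) Hm ltac:(lra)
    ltac:(apply grid_pos; lia) Hd2 ltac:(lra) ltac:(lra) HM1d).
  lra.
Qed.

Definition interior_cost a b :=
  sum_upto (fun k => RInt (dev_pow r phi (x (S k))) (grid_clip a b n (S k)) (grid_clip a b n (S (S k))))
    (n - 2).

Lemma interior_cost_le a b : 0 < a -> a <= b -> b < 1 ->
  interior_cost a b <=
  h * rpow (2 * M) (r - 1) * (al (n - 1) - al 1) +
  rpow 2 r * (h * rpow (Rabs (al 1)) r + RInt (fun t => rpow (Rabs (phi t)) r) (1 / INR n) d +
              RInt (fun t => rpow (Rabs (phi t)) r) (1 - d) (INR (n - 1) / INR n) +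
              h * rpow (Rabs (al (n - 1))) r).
Proof.
  intros Ha Hab Hb. pose proof INR_n_ge4. assert (Hh : 0 < h) by (apply Rinv_0_lt_compat; lra).
  pose proof (rpow_ge0 2 r). pose proof (rpow_ge0 (2 * M) (r - 1)).
  eapply Rle_trans.
  { apply sum_upto_le with (g' := fun k => h * rpow (2 * M) (r - 1) * (al (S (S k)) - al (S k)) +
      rpow 2 r * (h * low_part M r (al (S k)) + h * high_part M r (al (S (S k))))).
    intros k Hk. eapply Rle_trans; [apply interior_piece_le; auto; lia|].
    assert (al (S k) <= al (S (S k))) by (apply mono01_grid_le; auto; lia).
    pose proof (rpow_osc_le (al (S k)) (al (S (S k))) M r ltac:(lra) HM Hr) as Hosc.
    apply (Rmult_le_compat_l h) in Hosc; [|lra]. eapply Rle_trans; [exact Hosc|]. right. ring. }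
  rewrite sum_upto_plus, !sum_upto_scal, sum_upto_plus.
  rewrite (sum_upto_telescope (fun k => al (S k))). replace (S (n - 2)) with (n - 1)%nat by lia.
  pose proof low_part_sum_le. pose proof high_part_sum_le.
  assert (rpow 2 r * (sum_upto (fun k => h * low_part M r (al (S k))) (n - 2) +
            sum_upto (fun k => h * high_part M r (al (S (S k)))) (n - 2)) <=
          rpow 2 r * (h * rpow (Rabs (al 1)) r + RInt (fun t => rpow (Rabs (phi t)) r) (1 / INR n) d +
            (h * rpow (Rabs (al (n - 1))) r +
             RInt (fun t => rpow (Rabs (phi t)) r) (1 - d) (INR (n - 1) / INR n))))
    by (apply Rmult_le_compat_l; lra).
  lra.
Qed.

Lemma interior_cost_le_budget a b eta tau : 0 < a -> a <= b -> b < 1 -> h <= eta ->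
  h * rpow (Rabs (al 1)) r <= eta -> h * rpow (Rabs (al (n - 1))) r <= eta ->
  RInt (fun t => rpow (Rabs (phi t)) r) (1 / INR n) d <= tau ->
  RInt (fun t => rpow (Rabs (phi t)) r) (1 - d) (INR (n - 1) / INR n) <= tau ->
  interior_cost a b <= rpow (2 * M) (r - 1) * (4 * eta) + rpow 2 r * (2 * eta + 2 * tau).
Proof.
  intros Ha Hab Hb Hh HPL HPR HTL HTR.
  pose proof (interior_cost_le a b Ha Hab Hb) as Hbound.
  pose proof (rpow_ge0 2 r). pose proof (rpow_ge0 (2 * M) (r - 1)).
  assert (Hh0 : 0 < h) by (apply Rinv_0_lt_compat; pose proof INR_n_ge4; lra).
  assert (Habs : forall y, h * Rabs y <= h + h * rpow (Rabs y) r).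
  { intros y. pose proof (rpow_le_1_plus (Rabs y) 1 r (Rabs_pos _) ltac:(lra) Hr) as Hy.
    rewrite rpow_1 in Hy by apply Rabs_pos. nra. }
  assert (Hosc : h * (al (n - 1) - al 1) <= 4 * eta).
  { pose proof (Habs (al 1)). pose proof (Habs (al (n - 1))).
    pose proof (Rle_abs (al (n - 1))). pose proof (Rle_abs (- al 1)). rewrite Rabs_Ropp in *. nra. }
  assert (h * rpow (2 * M) (r - 1) * (al (n - 1) - al 1) <= rpow (2 * M) (r - 1) * (4 * eta)).
  { rewrite (Rmult_comm h), Rmult_assoc. apply Rmult_le_compat_l; lra. }
  assert (rpow 2 r * (h * rpow (Rabs (al 1)) r + RInt (fun t => rpow (Rabs (phi t)) r) (1 / INR n) d +
            RInt (fun t => rpow (Rabs (phi t)) r) (1 - d) (INR (n - 1) / INR n) +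
            h * rpow (Rabs (al (n - 1))) r) <= rpow 2 r * (2 * eta + 2 * tau))
    by (apply Rmult_le_compat_l; lra).
  lra.
Qed.
End Interior.

Lemma budget_le e W K : 0 < e -> 0 <= W -> 0 <= K ->
  W * (4 * (e / (8 * (W + 1) * (K + 1)))) +
  K * (2 * (e / (8 * (W + 1) * (K + 1))) + 2 * (e / (4 * (K + 1)))) <= e.
Proof.
  intros He HW HK. set (eta := e / (8 * (W + 1) * (K + 1))).
  assert (HP : 0 < (W + 1) * (K + 1)) by nra.
  assert (E1 : K * (2 * (e / (4 * (K + 1)))) <= e / 2).
  { replace (K * (2 * (e / (4 * (K + 1))))) with (e / 2 * (K / (K + 1))) by (field; lra).
    rewrite <- (Rmult_1_r (e / 2)) at 2. apply Rmult_le_compat_l; [lra|].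
    apply Rmult_le_reg_r with (K + 1); [lra|]. unfold Rdiv.
    rewrite Rmult_assoc, Rinv_l, Rmult_1_r by lra. lra. }
  assert (E2 : (W + K) * (4 * eta) <= e / 2).
  { replace ((W + K) * (4 * eta)) with (e / 2 * ((W + K) / ((W + 1) * (K + 1))))
      by (unfold eta; field; lra).
    rewrite <- (Rmult_1_r (e / 2)) at 2. apply Rmult_le_compat_l; [lra|].
    apply Rmult_le_reg_r with ((W + 1) * (K + 1)); [lra|]. unfold Rdiv.
    rewrite Rmult_assoc, Rinv_l, Rmult_1_r by lra. nra. }
  assert (Heta : 0 < eta) by (unfold eta; apply Rdiv_lt_0_compat; lra).
  assert (K * (2 * eta) <= K * (4 * eta)) by (apply Rmult_le_compat_l; lra).
  rewrite Rmult_plus_distr_r in E2. rewrite Rmult_plus_distr_l. lra.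
Qed.

(* The tails fix a level d and a bound M for |phi| on [d, 1 - d]; n is then taken
   large enough for the edge terms to be small relative to (2M)^(r-1). *)
Lemma interior_cost_vanishes r phi I : 1 <= r -> mono_Lr r phi I ->
  forall e, 0 < e -> exists N, forall n, (N <= n)%nat -> (4 <= n)%nat ->
    forall x, bracketed phi n x ->
    forall a b, 0 < a -> a <= b -> b < 1 -> interior_cost phi r n x a b <= e.
Proof.
  intros Hr Hphi e He. pose proof (proj1 Hphi) as Hm.
  set (K := rpow 2 r). assert (HK : 0 <= K) by apply rpow_ge0.
  set (tau := e / (4 * (K + 1))). assert (Htau : 0 < tau) by (apply Rdiv_lt_0_compat; lra).
  destruct (mono_Lr_tail_left r I phi ltac:(lra) Hphi tau Htau) as [dL [HdL HTL]].
  destruct (mono_Lr_tail_right r I phi tau ltac:(lra) Hphi Htau) as [dR [HdR HTR]].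
  pose proof (Rmin_l dL dR). pose proof (Rmin_r dL dR). set (d := Rmin dL dR) in *.
  assert (Hd : 0 < d) by (apply Rmin_glb_lt; lra).
  set (M := Rmax 1 (Rmax (Rabs (phi d)) (Rabs (phi (1 - d))))).
  assert (HM : 1 <= M /\ Rabs (phi d) <= M /\ Rabs (phi (1 - d)) <= M).
  { unfold M. split; [apply Rmax_l|].
    split; eapply Rle_trans; [|apply Rmax_r| |apply Rmax_r]; [apply Rmax_l|apply Rmax_r]. }
  set (W := rpow (2 * M) (r - 1)). assert (HW : 0 <= W) by apply rpow_ge0.
  set (eta := e / (8 * (W + 1) * (K + 1))).
  assert (Heta : 0 < eta) by (unfold eta; apply Rdiv_lt_0_compat; nra).
  destruct (mono_Lr_edge_left r I phi ltac:(lra) Hphi eta Heta) as [hL [HhL HVL]].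
  destruct (mono_Lr_edge_right r I phi eta ltac:(lra) Hphi Heta) as [hR [HhR HVR]].
  destruct (exists_nat_inv_le (Rmin (Rmin d eta) (Rmin hL hR))) as [N [_ HN]].
  { repeat apply Rmin_glb_lt; lra. }
  exists N. intros n Hn Hn4 x Hx a b Ha Hab Hb.
  pose proof (HN n Hn) as Hh.
  pose proof (Rmin_l (Rmin d eta) (Rmin hL hR)). pose proof (Rmin_r (Rmin d eta) (Rmin hL hR)).
  pose proof (Rmin_l d eta). pose proof (Rmin_r d eta). pose proof (Rmin_l hL hR). pose proof (Rmin_r hL hR).
  assert (Hinv : / INR n = 1 / INR n) by (field; apply not_0_INR; lia).
  assert (Hh0 : 0 < 1 / INR n) by (apply Rdiv_lt_0_compat; [lra|apply lt_0_INR; lia]).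
  eapply Rle_trans; [apply (interior_cost_le_budget phi r M d n x Hm Hr Hn4 Hx (proj1 HM)
    ltac:(lra) (proj1 (proj2 HM)) (proj2 (proj2 HM)) a b eta tau); auto; rewrite ?Hinv|].
  - lra.
  - change (INR 1 / INR n) with (1 / INR n). apply HVL. lra.
  - rewrite grid_last by lia. apply HVR. lra.
  - apply HTL; lra.
  - apply HTR; [lra|rewrite grid_last by lia; lra|apply grid_lt1; lia].
  - pose proof (budget_le e W K He HW HK). unfold eta, tau, W, K in *. lra.
Qed.

(** * End pieces *)

Definition left_end_le (r : R) (phi : R -> R) (c h e : R) : Prop :=
  forall u v, 0 < u -> u <= v -> v <= h -> RInt (dev_pow r phi c) u v <= e.

Definition right_end_le (r : R) (phi : R -> R) (c h e : R) : Prop :=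
  forall u v, 1 - h <= u -> u <= v -> v < 1 -> RInt (dev_pow r phi c) u v <= e.

Lemma right_end_le_refl01 r phi c h e : mono01 phi -> 0 <= r -> h < 1 ->
  left_end_le r (refl01 phi) (- c) h e -> right_end_le r phi c h e.
Proof.
  intros Hm Hr Hh H u v Hu Huv Hv.
  specialize (H (1 - v) (1 - u) ltac:(lra) ltac:(lra) ltac:(lra)).
  rewrite RInt_dev_pow_refl01 in H by (auto; lra).
  replace (1 - (1 - u)) with u in H by ring. replace (1 - (1 - v)) with v in H by ring. exact H.
Qed.

Lemma sum_upto_split_ends g n : (2 <= n)%nat ->
  sum_upto g n = g O + sum_upto (fun k => g (S k)) (n - 2) + g (n - 1)%nat.
Proof.
  intros Hn. replace n with (S (S (n - 2))) at 1 by lia.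
  rewrite sum_upto_shift. simpl. replace (S (n - 2)) with (n - 1)%nat by lia. ring.
Qed.

Lemma RInt_emp_gap_pow_le F r n x a b e : is_cdf F -> 0 <= r -> (2 <= n)%nat -> in_Xi n x ->
  0 < a -> a <= b -> b < 1 ->
  left_end_le r (qf F) (x O) (1 / INR n) e -> right_end_le r (qf F) (x (n - 1)%nat) (1 / INR n) e ->
  RInt (emp_gap_pow F n x r) a b <= e + interior_cost (qf F) r n x a b + e.
Proof.
  intros HF Hr Hn Hx Ha Hab Hb HL HR.
  destruct (RInt_emp_gap_pow_decomp F n x r a b HF Hr ltac:(lia) Hx Ha Hab Hb) as [_ ->].
  rewrite sum_upto_split_ends by lia. unfold interior_cost.
  assert (He : 0 <= e).
  { specialize (HL (1 / INR n) (1 / INR n)). rewrite RInt_point in HL.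
    apply HL; [apply Rdiv_lt_0_compat; [lra|apply lt_0_INR; lia]|lra|lra]. }
  assert (T0 : RInt (dev_pow r (qf F) (x O)) (grid_clip a b n 0) (grid_clip a b n 1) <= e).
  { destruct (grid_clip_piece a b n 0 Hab) as [E|[_ [H1 H2]]]; [rewrite E, RInt_point; exact He|].
    pose proof (grid_clip_bounds a b n 0 Hab). change (INR 1) with 1 in H1. apply HL; lra. }
  assert (T1 : RInt (dev_pow r (qf F) (x (n - 1)%nat))
                 (grid_clip a b n (n - 1)) (grid_clip a b n (S (n - 1))) <= e).
  { destruct (grid_clip_piece a b n (n - 1) Hab) as [E|[H1 [_ H2]]]; [rewrite E, RInt_point; exact He|].
    pose proof (grid_clip_bounds a b n (S (n - 1)) Hab). rewrite grid_last in H1 by lia.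
    apply HR; lra. }
  lra.
Qed.

Lemma emp_gap_pow_vanishes_of_bracketed F r I (x : nat -> nat -> R) :
  is_cdf F -> 1 <= r -> mono_Lr r (qf F) I ->
  (forall n, (4 <= n)%nat -> in_Xi n (x n) /\ bracketed (qf F) n (x n)) ->
  (forall e, 0 < e -> exists N, forall n, (N <= n)%nat -> (4 <= n)%nat ->
     left_end_le r (qf F) (x n O) (1 / INR n) e /\
     right_end_le r (qf F) (x n (n - 1)%nat) (1 / INR n) e) ->
  forall e, 0 < e -> exists N, forall n, (N <= n)%nat -> (1 <= n)%nat ->
    forall a b, 0 < a -> a <= b -> b < 1 -> RInt (emp_gap_pow F n (x n) r) a b <= e.
Proof.
  intros HF Hr Hq Hx Hends e He.
  destruct (interior_cost_vanishes r (qf F) I Hr Hq (e / 3) ltac:(lra)) as [N1 HN1].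
  destruct (Hends (e / 3) ltac:(lra)) as [N2 HN2].
  exists (Nat.max 4 (Nat.max N1 N2)). intros n Hn _ a b Ha Hab Hb.
  destruct (Hx n ltac:(lia)) as [Hs Hbr]. destruct (HN2 n ltac:(lia) ltac:(lia)) as [HL HR].
  pose proof (HN1 n ltac:(lia) ltac:(lia) (x n) Hbr a b Ha Hab Hb).
  pose proof (RInt_emp_gap_pow_le F r n (x n) a b (e / 3) HF ltac:(lra) ltac:(lia) Hs Ha Hab Hb HL HR).
  lra.
Qed.

Definition edge_small (r : R) (phi : R -> R) (h eta : R) : Prop :=
  h * rpow (Rabs (phi h)) r <= eta /\ h * rpow (Rabs (phi (h / 2))) r <= eta /\
  forall a, 0 < a -> a <= h -> RInt (fun t => rpow (Rabs (phi t)) r) a h <= eta.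

Lemma mono_Lr_edge_small r phi I : 0 <= r -> mono_Lr r phi I ->
  forall eta, 0 < eta -> exists h0, 0 < h0 /\ forall h, 0 < h <= h0 -> edge_small r phi h eta.
Proof.
  intros Hr Hphi eta Heta.
  destruct (mono_Lr_tail_left r I phi Hr Hphi eta Heta) as [d [Hd Htail]].
  destruct (mono_Lr_edge_left r I phi Hr Hphi (eta / 2) ltac:(lra)) as [h1 [Hh1 Hedge]].
  exists (Rmin d h1). split; [apply Rmin_glb_lt; lra|]. intros h Hh.
  pose proof (Rmin_l d h1). pose proof (Rmin_r d h1).
  split; [|split].
  - pose proof (Hedge h ltac:(lra)). lra.
  - pose proof (Hedge (h / 2) ltac:(lra)). lra.
  - intros a Ha Hah. apply Htail; lra.
Qed.

(** * Midpoint quantizers *)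

Lemma left_end_le_midpoint r phi h eta : mono01 phi -> 0 <= r -> 0 < h < 1 ->
  edge_small r phi h eta -> left_end_le r phi (phi (h / 2)) h (rpow 2 r * (2 * eta)).
Proof.
  intros Hm Hr Hh [_ [Hmid Htail]] u v Hu Huv Hv.
  eapply Rle_trans; [apply RInt_dev_pow_le; auto; lra|].
  apply Rmult_le_compat_l; [apply rpow_ge0|].
  assert ((v - u) * rpow (Rabs (phi (h / 2))) r <= h * rpow (Rabs (phi (h / 2))) r)
    by (apply Rmult_le_compat_r; [apply rpow_ge0|lra]).
  assert (RInt (fun t => rpow (Rabs (phi t)) r) u v <= RInt (fun t => rpow (Rabs (phi t)) r) u h).
  { apply RInt_subinterval_le; try lra; [apply ex_RInt_abs_pow; auto; lra|].
    intros; apply rpow_ge0. }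
  pose proof (Htail u Hu ltac:(lra)). lra.
Qed.

Lemma midpoint_in_01 n i : (i < n)%nat -> 0 < (2 * INR i + 1) / (2 * INR n) < 1.
Proof.
  intros. assert (0 < INR n) by (apply lt_0_INR; lia). pose proof (pos_INR i).
  assert (INR i + 1 <= INR n) by (rewrite <- S_INR; apply le_INR; lia).
  split; [apply Rdiv_lt_0_compat; lra|].
  apply Rmult_lt_reg_r with (2 * INR n); [lra|]. field_simplify; lra.
Qed.

Definition midpoint_quantizer (F : R -> R) (n : nat) (i : nat) : R :=
  qf F ((2 * INR i + 1) / (2 * INR n)).

Lemma midpoint_quantizer_sorted F n : is_cdf F -> in_Xi n (midpoint_quantizer F n).
Proof.
  intros HF i j Hij Hj. unfold midpoint_quantizer.
  pose proof (midpoint_in_01 n i ltac:(lia)). pose proof (midpoint_in_01 n j Hj).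
  apply qf_mono01; auto; try lra.
  assert (0 < INR n) by (apply lt_0_INR; lia). assert (INR i <= INR j) by (apply le_INR; auto).
  apply Rmult_le_compat_r; [left; apply Rinv_0_lt_compat|]; lra.
Qed.

Lemma midpoint_quantizer_bracketed F n : is_cdf F -> (2 <= n)%nat ->
  bracketed (qf F) n (midpoint_quantizer F n).
Proof.
  intros HF Hn k Hk1 Hk2. unfold midpoint_quantizer.
  assert (0 < INR n) by (apply lt_0_INR; lia).
  pose proof (midpoint_in_01 n k ltac:(lia)). pose proof (grid_pos n k ltac:(lia) Hk1).
  pose proof (grid_lt1 n (S k) ltac:(lia)). rewrite S_INR in *.
  split; apply qf_mono01; auto; try lra; apply Rmult_le_reg_r with (2 * INR n); try lra;
    field_simplify; lra.
Qed.

Lemma midpoint_quantizer_ends_small F r I : 0 <= r -> is_cdf F -> mono_Lr r (qf F) I ->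
  forall e, 0 < e -> exists N, forall n, (N <= n)%nat -> (4 <= n)%nat ->
    left_end_le r (qf F) (midpoint_quantizer F n O) (1 / INR n) e /\
    right_end_le r (qf F) (midpoint_quantizer F n (n - 1)%nat) (1 / INR n) e.
Proof.
  intros Hr HF Hq e He. pose proof (qf_mono01 F HF) as Hm.
  assert (H2r : 0 < rpow 2 r) by (apply rpow_gt0; lra).
  set (eta := e / (2 * rpow 2 r)). assert (Heta : 0 < eta) by (apply Rdiv_lt_0_compat; lra).
  assert (Ee : e = rpow 2 r * (2 * eta)) by (unfold eta; field; lra).
  destruct (mono_Lr_edge_small r (qf F) I ltac:(lra) Hq eta Heta) as [hL [HhL HL]].
  destruct (mono_Lr_edge_small r (refl01 (qf F)) I ltac:(lra)
    (mono_Lr_refl01 r _ I ltac:(lra) Hq) eta Heta) as [hR [HhR HR]].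
  destruct (exists_nat_inv_le (Rmin hL hR)) as [N [_ HN]]; [apply Rmin_glb_lt; lra|].
  exists N. intros n Hn Hn4. pose proof (HN n Hn) as Hh.
  pose proof (Rmin_l hL hR). pose proof (Rmin_r hL hR).
  assert (Hnr : 4 <= INR n) by (apply (le_INR 4) in Hn4; simpl in Hn4; lra).
  assert (Hh01 : 0 < 1 / INR n < 1)
    by (split; [apply Rdiv_lt_0_compat|apply Rmult_lt_reg_r with (INR n); field_simplify]; lra).
  rewrite Ee. split.
  - replace (midpoint_quantizer F n O) with (qf F (1 / INR n / 2))
      by (unfold midpoint_quantizer; f_equal; simpl; field; lra).
    apply left_end_le_midpoint; auto; try lra. apply HL. lra.
  - apply right_end_le_refl01; auto; try lra.
    replace (- midpoint_quantizer F n (n - 1)) with (refl01 (qf F) (1 / INR n / 2))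
      by (unfold refl01, midpoint_quantizer; f_equal; f_equal; rewrite minus_INR by lia; simpl; field; lra).
    apply left_end_le_midpoint; [apply mono01_refl01; auto|lra|lra|]. apply HR. lra.
Qed.

Lemma midpoint_quantizer_cvg F r : 1 <= r -> is_cdf F -> in_Pr r F ->
  exists D : nat -> R,
    (forall n, (1 <= n)%nat -> dist_r r (emp_cdf n (midpoint_quantizer F n)) F (D n)) /\ Un_cv D 0.
Proof.
  intros Hr HF HP. destruct (mono_Lr_qf F r ltac:(lra) HF HP) as [I Hq].
  apply (dist_r_emp_cvg_0 F r I (midpoint_quantizer F)); auto.
  - intros n _. apply midpoint_quantizer_sorted; auto.
  - apply (emp_gap_pow_vanishes_of_bracketed F r I); auto.
    + intros n Hn. split; [apply midpoint_quantizer_sorted|apply midpoint_quantizer_bracketed]; auto; lia.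
    + apply (midpoint_quantizer_ends_small F r I); auto. lra.
Qed.

(** * Optimal quantizers *)

Definition s_optimal (F : R -> R) (s : R) (n : nat) (x : nat -> R) : Prop :=
  forall y, in_Xi n y -> forall Jx Jy,
    int01 (emp_gap_pow F n x s) Jx -> int01 (emp_gap_pow F n y s) Jy -> Jx <= Jy.

Lemma s_optimal_of_dist_r F s n x : is_cdf F -> 0 < s -> (1 <= n)%nat -> in_Xi n x ->
  (forall y D1 D2, in_Xi n y -> dist_r s (emp_cdf n x) F D1 -> dist_r s (emp_cdf n y) F D2 ->
     D1 <= D2) ->
  s_optimal F s n x.
Proof.
  intros HF Hs Hn Hx Hopt y Hy Jx Jy HJx HJy.
  assert (HJy0 : 0 <= Jy).
  { apply (int01_nonneg _ Jy HJy); [|intros; apply rpow_ge0].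
    intros. apply ex_RInt_emp_gap_pow; auto; lra. }
  apply (rpow_le_reg _ _ (/ s)); auto; [apply Rinv_0_lt_compat; lra|].
  apply (Hopt y); auto; [exists Jx | exists Jy]; auto.
Qed.

Lemma rpow_dev_gain x z w s : 1 <= s -> (z = x \/ (x < z /\ z <= w) \/ (w <= z /\ z < x)) ->
  rpow (Rabs (z - w)) s + rpow (Rabs (x - z)) s <= rpow (Rabs (x - w)) s.
Proof.
  intros Hs [->|[[H1 H2]|[H1 H2]]].
  - rewrite Rminus_diag, Rabs_R0, rpow_0_l. lra.
  - rewrite (Rabs_left1 (z - w)), (Rabs_left (x - z)), (Rabs_left (x - w)) by lra.
    replace (- (x - w)) with (- (z - w) + - (x - z)) by ring. apply rpow_plus_ge; lra.
  - rewrite (Rabs_right (z - w)), (Rabs_right (x - z)), (Rabs_right (x - w)) by lra.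
    replace (x - w) with ((z - w) + (x - z)) by ring. apply rpow_plus_ge; lra.
Qed.

Definition clamp_quantizer (phi : R -> R) (n : nat) (x : nat -> R) (k : nat) : R :=
  if Nat.eqb k 0 then Rmin (x 0%nat) (phi (INR 1 / INR n))
  else if Nat.eqb k (n - 1) then Rmax (x (n - 1)%nat) (phi (INR (n - 1) / INR n))
  else Rmin (Rmax (x k) (phi (INR k / INR n))) (phi (INR (S k) / INR n)).

Section Clamp.
Variables (phi : R -> R) (n : nat) (x : nat -> R).
Hypothesis Hm : mono01 phi.
Hypothesis Hn : (4 <= n)%nat.

Let z := clamp_quantizer phi n x.

Lemma clamp_le k : (k <= n - 2)%nat -> z k <= phi (INR (S k) / INR n).
Proof.
  intros Hk. unfold z, clamp_quantizer. destruct (Nat.eqb_spec k 0) as [->|H0]; [apply Rmin_r|].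
  destruct (Nat.eqb_spec k (n - 1)) as [H1|H1]; [lia|]. apply Rmin_r.
Qed.

Lemma clamp_ge k : (1 <= k)%nat -> (k <= n - 1)%nat -> phi (INR k / INR n) <= z k.
Proof.
  intros Hk1 Hk2. unfold z, clamp_quantizer. destruct (Nat.eqb_spec k 0) as [H0|H0]; [lia|].
  destruct (Nat.eqb_spec k (n - 1)) as [->|H1]; [apply Rmax_r|].
  apply Rmin_glb; [apply Rmax_r|]. apply mono01_grid_le; auto; lia.
Qed.

Lemma clamp_sorted : in_Xi n z.
Proof.
  intros i j Hij Hj. destruct (Nat.eq_dec i j) as [->|Hne]; [lra|].
  eapply Rle_trans; [apply clamp_le; lia|]. eapply Rle_trans; [|apply clamp_ge; lia].
  apply mono01_grid_le; auto; lia.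
Qed.

Lemma clamp_between k t : (k < n)%nat -> INR k / INR n < t < INR (S k) / INR n ->
  z k = x k \/ (x k < z k /\ z k <= phi t) \/ (phi t <= z k /\ z k < x k).
Proof.
  intros Hk Ht. assert (Hnr : 0 < INR n) by (apply lt_0_INR; lia).
  assert (Hlo : (1 <= k)%nat -> phi (INR k / INR n) <= phi t).
  { intros. pose proof (grid_pos n k ltac:(lia) H). assert (t < 1); [|apply Hm; lra].
    pose proof (grid_le n (S k) n Hk). rewrite grid_n in H1 by lia. lra. }
  assert (Hhi : (S k < n)%nat -> phi t <= phi (INR (S k) / INR n)).
  { intros. pose proof (grid_lt1 n (S k) H). assert (0 < t); [|apply Hm; lra].
    pose proof (grid_le n 0 k ltac:(lia)). simpl in H1. unfold Rdiv in H1 at 1. lra. }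
  unfold z, clamp_quantizer. destruct (Nat.eqb_spec k 0) as [->|H0].
  { pose proof (Hhi ltac:(lia)). unfold Rmin. destruct (Rle_dec (x 0%nat) _); [left; auto|].
    right; right. lra. }
  destruct (Nat.eqb_spec k (n - 1)) as [->|H1].
  { pose proof (Hlo ltac:(lia)). unfold Rmax. destruct (Rle_dec (x (n - 1)%nat) _); [|left; auto].
    destruct (Req_dec (x (n - 1)%nat) (phi (INR (n - 1) / INR n))) as [He|He]; [left; auto|].
    right; left. lra. }
  pose proof (Hlo ltac:(lia)). pose proof (Hhi ltac:(lia)).
  unfold Rmax, Rmin. destruct (Rle_dec (x k) (phi (INR k / INR n))).
  - destruct (Rle_dec (phi (INR k / INR n)) (phi (INR (S k) / INR n))); [|lra].
    destruct (Req_dec (x k) (phi (INR k / INR n))) as [He|He]; [left; auto|]. right; left. lra.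
  - destruct (Rle_dec (x k) (phi (INR (S k) / INR n))); [left; auto|]. right; right. lra.
Qed.

End Clamp.

Lemma inv_2n_bounds n : (2 <= n)%nat -> 0 < / (2 * INR n) <= 1 / 4.
Proof.
  intros Hn. apply (le_INR 2) in Hn. simpl in Hn.
  split; [apply Rinv_0_lt_compat; lra|].
  replace (1 / 4) with (/ 4) by field. apply Rinv_le_contravar; lra.
Qed.

Lemma grid_clip_width n a b k : (2 <= n)%nat -> 0 < a -> a <= / (2 * INR n) ->
  1 - / (2 * INR n) <= b -> b < 1 -> (k < n)%nat ->
  / (2 * INR n) <= grid_clip a b n (S k) - grid_clip a b n k.
Proof.
  intros Hn Ha Haw Hbw Hb Hk. assert (Hnr : 2 <= INR n) by (apply (le_INR 2) in Hn; simpl in Hn; lra).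
  assert (Hw : / (2 * INR n) = / INR n - / (2 * INR n)) by (field; lra).
  pose proof (inv_2n_bounds n Hn).
  assert (Hinner : forall j, (1 <= j)%nat -> (j <= n - 1)%nat -> grid_clip a b n j = INR j / INR n).
  { intros j Hj1 Hj2. apply grid_clip_inner. pose proof (grid_le n 1 j Hj1).
    pose proof (grid_le n j (n - 1) Hj2). rewrite grid_last in * by lia.
    change (INR 1) with 1 in *. unfold Rdiv in *. rewrite Rmult_1_l in *. lra. }
  destruct (Nat.eq_dec k 0) as [->|Hk0].
  { rewrite grid_clip_0, Hinner by lra || lia. change (INR 1 / INR n) with (1 / INR n). unfold Rdiv. lra. }
  destruct (Nat.eq_dec k (n - 1)) as [->|Hk1].
  { replace (S (n - 1)) with n by lia. rewrite grid_clip_n, Hinner, grid_last by lra || lia.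
    unfold Rdiv. lra. }
  rewrite !Hinner, grid_step by lia. lra.
Qed.

Section Clamp_cost.
Variables (F : R -> R) (r s I : R) (n : nat) (x : nat -> R).
Hypothesis HF : is_cdf F.
Hypothesis Hs : 1 <= s.
Hypothesis Hsr : s <= r.
Hypothesis Hq : mono_Lr r (qf F) I.
Hypothesis Hn : (4 <= n)%nat.
Hypothesis Hx : in_Xi n x.
Hypothesis Hopt : s_optimal F s n x.

Let z := clamp_quantizer (qf F) n x.
Let w := / (2 * INR n).
Let G k := rpow (Rabs (x k - z k)) s.

Lemma clamp_cost_gain a b : 0 < a -> a <= w -> 1 - w <= b -> b < 1 ->
  RInt (emp_gap_pow F n z s) a b + w * sum_upto G n <= RInt (emp_gap_pow F n x s) a b.
Proof.
  intros Ha Haw Hb Hb1.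
  assert (Hab : a <= b) by (pose proof (inv_2n_bounds n ltac:(lia)); unfold w in *; lra).
  pose proof (qf_mono01 F HF) as Hm.
  pose proof (clamp_sorted (qf F) n x Hm Hn) as Hz.
  destruct (RInt_emp_gap_pow_decomp F n z s a b HF ltac:(lra) ltac:(lia) Hz Ha Hab Hb1) as [_ ->].
  destruct (RInt_emp_gap_pow_decomp F n x s a b HF ltac:(lra) ltac:(lia) Hx Ha Hab Hb1) as [_ ->].
  rewrite <- sum_upto_scal, <- sum_upto_plus. apply sum_upto_le. intros k Hk.
  pose proof (grid_clip_mono a b n k Hab).
  pose proof (grid_clip_bounds a b n k Hab). pose proof (grid_clip_bounds a b n (S k) Hab).
  pose proof (grid_clip_width n a b k ltac:(lia) Ha Haw Hb Hb1 Hk).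
  set (c1 := grid_clip a b n k) in *. set (c2 := grid_clip a b n (S k)) in *.
  assert (HGk : 0 <= G k) by apply rpow_ge0.
  assert (w * G k <= (c2 - c1) * G k) by (unfold w; apply Rmult_le_compat_r; lra).
  assert (RInt (dev_pow s (qf F) (z k)) c1 c2 <= RInt (dev_pow s (qf F) (x k)) c1 c2 - (c2 - c1) * G k).
  { rewrite <- RInt_const_R.
    rewrite <- (RInt_minus (V := R_CompleteNormedModule))
      by (try apply ex_RInt_const; apply ex_RInt_dev_pow; auto; lra).
    apply RInt_le; [lra|apply ex_RInt_dev_pow; auto; lra| |].
    - apply (ex_RInt_minus (V := R_NormedModule)); [apply ex_RInt_dev_pow; auto; lra|apply ex_RInt_const].
    - intros t Ht. unfold dev_pow, G, minus, plus, opp; simpl.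
      pose proof (rpow_dev_gain (x k) (z k) (qf F t) s Hs
        (clamp_between (qf F) n x Hm Hn k t Hk (grid_clip_in a b n k t Hab Ht))). lra. }
  lra.
Qed.

(* Optimality forces the gain w * sum G of clamping to vanish. *)
Lemma optimal_clamped k : (k < n)%nat -> x k = z k.
Proof.
  intros Hk. pose proof (inv_2n_bounds n ltac:(lia)) as Hw. fold w in Hw.
  pose proof (clamp_sorted (qf F) n x (qf_mono01 F HF) Hn) as Hz.
  destruct (int01_emp_gap_pow_exists F r s n x I) as [Jx HJx]; auto; try lra; try lia.
  destruct (int01_emp_gap_pow_exists F r s n z I) as [Jz HJz]; auto; try lra; try lia.
  pose proof (Hopt z Hz Jx Jz HJx HJz) as Hle.
  assert (Hgain : Jz <= Jx - w * sum_upto G n).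
  { apply (int01_lub _ Jz _ HJz). intros a' b' Ha' Hab' Hb' _.
    pose proof (Rmin_l a' w). pose proof (Rmin_r a' w).
    pose proof (Rmax_l b' (1 - w)). pose proof (Rmax_r b' (1 - w)).
    set (a := Rmin a' w) in *. set (b := Rmax b' (1 - w)) in *.
    assert (Ha : 0 < a) by (apply Rmin_glb_lt; lra).
    assert (Hb : b < 1) by (apply Rmax_lub_lt; lra).
    assert (RInt (emp_gap_pow F n z s) a' b' <= RInt (emp_gap_pow F n z s) a b).
    { apply RInt_subinterval_le; try lra; [apply ex_RInt_emp_gap_pow; auto; lia || lra|].
      intros; apply rpow_ge0. }
    pose proof (clamp_cost_gain a b Ha ltac:(lra) ltac:(lra) Hb).
    assert (RInt (emp_gap_pow F n x s) a b <= Jx)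
      by (apply int01_ub; auto; try lra; apply ex_RInt_emp_gap_pow; auto; lia || lra).
    lra. }
  assert (HG0 : sum_upto G n <= 0).
  { destruct (Rle_lt_dec (sum_upto G n) 0); auto. assert (0 < w * sum_upto G n) by nra. lra. }
  pose proof (sum_upto_term_le G n k (fun _ _ => rpow_ge0 _ _) Hk).
  destruct (Req_dec (x k) (z k)) as [He|He]; auto.
  assert (0 < G k) by (apply rpow_gt0, Rabs_pos_lt; lra). lra.
Qed.

Lemma optimal_bracketed : bracketed (qf F) n x.
Proof.
  intros k Hk1 Hk2. rewrite (optimal_clamped k) by lia.
  split; [apply clamp_ge|apply clamp_le]; try (apply qf_mono01; auto); lia.
Qed.

Lemma optimal_first_le : x O <= qf F (INR 1 / INR n).
Proof. rewrite (optimal_clamped O) by lia. apply clamp_le; try (apply qf_mono01; auto); lia. Qed.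

Lemma optimal_last_ge : qf F (INR (n - 1) / INR n) <= x (n - 1)%nat.
Proof. rewrite (optimal_clamped (n - 1)) by lia. apply clamp_ge; try (apply qf_mono01; auto); lia. Qed.
End Clamp_cost.

Definition ends_replaced (phi : R -> R) (n : nat) (x : nat -> R) (k : nat) : R :=
  if Nat.eqb k 0 then phi (INR 1 / INR n)
  else if Nat.eqb k (n - 1) then phi (INR (n - 1) / INR n)
  else x k.

Section Ends.
Variables (F : R -> R) (r s I : R) (n : nat) (x : nat -> R).
Hypothesis HF : is_cdf F.
Hypothesis Hs : 1 <= s.
Hypothesis Hsr : s <= r.
Hypothesis Hq : mono_Lr r (qf F) I.
Hypothesis Hn : (4 <= n)%nat.
Hypothesis Hx : in_Xi n x.
Hypothesis Hopt : s_optimal F s n x.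

Let q := qf F.
Let h := 1 / INR n.
Let z := ends_replaced q n x.

Lemma h_bounds : 0 < h <= 1 / 4 /\ INR (n - 1) / INR n = 1 - h.
Proof.
  assert (Hnr : 4 <= INR n) by (apply (le_INR 4) in Hn; simpl in Hn; lra).
  split; [split|apply grid_last; lia]; unfold h; [apply Rdiv_lt_0_compat; lra|].
  apply Rmult_le_reg_r with (INR n); [lra|]. field_simplify; lra.
Qed.

Lemma ends_replaced_mid k : (1 <= k)%nat -> (k <= n - 2)%nat -> z k = x k.
Proof.
  intros. unfold z, ends_replaced. destruct (Nat.eqb_spec k 0); [lia|].
  destruct (Nat.eqb_spec k (n - 1)); [lia|reflexivity].
Qed.

Lemma ends_replaced_sorted : in_Xi n z.
Proof.
  pose proof (optimal_bracketed F r s I n x HF Hs Hsr Hq Hn Hx Hopt) as Hbr.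
  assert (Hhi : forall k, (k <= n - 2)%nat -> z k <= q (INR (S k) / INR n)).
  { intros k Hk. destruct (Nat.eq_dec k 0) as [->|Hk0]; [unfold z, ends_replaced; simpl; lra|].
    rewrite ends_replaced_mid by lia. apply Hbr; lia. }
  assert (Hlo : forall k, (1 <= k)%nat -> (k <= n - 1)%nat -> q (INR k / INR n) <= z k).
  { intros k Hk1 Hk2. destruct (Nat.eq_dec k (n - 1)) as [->|Hk].
    - unfold z, ends_replaced. destruct (Nat.eqb_spec (n - 1) 0); [lia|]. rewrite Nat.eqb_refl. lra.
    - rewrite ends_replaced_mid by lia. apply Hbr; lia. }
  intros i j Hij Hj. destruct (Nat.eq_dec i j) as [->|Hne]; [lra|].
  eapply Rle_trans; [apply Hhi; lia|]. eapply Rle_trans; [|apply Hlo; lia].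
  apply mono01_grid_le; [apply qf_mono01; auto|lia..].
Qed.

Lemma RInt_emp_gap_pow_ends_split y p a b : in_Xi n y -> 0 <= p -> 0 < a -> a <= h ->
  1 - h <= b -> b < 1 ->
  RInt (emp_gap_pow F n y p) a b =
  RInt (dev_pow p q (y O)) a h + RInt (emp_gap_pow F n y p) h (1 - h) +
  RInt (dev_pow p q (y (n - 1)%nat)) (1 - h) b.
Proof.
  intros Hy Hp Ha Ha1 Hb2 Hb. destruct h_bounds as [Hh Hlast].
  assert (Ex : forall u v, 0 < u -> u <= v -> v < 1 -> ex_RInt (emp_gap_pow F n y p) u v)
    by (intros; apply ex_RInt_emp_gap_pow; auto; lia).
  rewrite <- (RInt_Chasles_R _ a h b), <- (RInt_Chasles_R _ h (1 - h) b) by (apply Ex; lra).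
  rewrite (RInt_ext _ (dev_pow p q (y O)) a h), (RInt_ext _ (dev_pow p q (y (n - 1)%nat)) (1 - h) b);
    [lra| |]; intros t Ht; rewrite Rmin_left, Rmax_right in Ht by lra;
    apply emp_gap_pow_piece; auto; try lia.
  - replace (S (n - 1)) with n by lia. rewrite grid_n, Hlast by lia. lra.
  - simpl. unfold Rdiv at 1. rewrite Rmult_0_l. fold h. lra.
Qed.

Lemma RInt_emp_gap_pow_mid_replaced :
  RInt (emp_gap_pow F n x s) h (1 - h) = RInt (emp_gap_pow F n z s) h (1 - h).
Proof.
  destruct h_bounds as [Hh Hlast].
  apply RInt_ext. intros t Ht. rewrite Rmin_left, Rmax_right in Ht by lra.
  destruct (grid_piece_exists n t ltac:(lia) ltac:(lra)) as [k [Hk Hkt]].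
  assert (Hk1 : (1 <= k)%nat).
  { destruct (Nat.eq_dec k 0) as [->|]; [|lia]. change (INR 1) with 1 in Hkt. fold h in Hkt. lra. }
  assert (Hk2 : (k <= n - 2)%nat).
  { destruct (Nat.eq_dec k (n - 1)) as [->|]; [|lia]. lra. }
  rewrite !(emp_gap_pow_piece F n _ s k t), ends_replaced_mid by (auto using ends_replaced_sorted).
  reflexivity.
Qed.

Let ends_cost y a b :=
  RInt (dev_pow s q (y O)) a h + RInt (dev_pow s q (y (n - 1)%nat)) (1 - h) b.

(* Optimality transfers any bound on the end costs of [z] to those of [x],
   since [x] and [z] coincide on the interior pieces. *)
Lemma ends_cost_le_replaced B :
  (forall a b, 0 < a -> a <= h -> 1 - h <= b -> b < 1 -> ends_cost z a b <= B) ->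
  forall a b, 0 < a -> a <= h -> 1 - h <= b -> b < 1 -> ends_cost x a b <= B.
Proof.
  intros HB a b Ha Ha1 Hb2 Hb. destruct h_bounds as [Hh Hlast].
  pose proof ends_replaced_sorted as Hz.
  destruct (int01_emp_gap_pow_exists F r s n x I) as [Jx HJx]; auto; try lra; try lia.
  destruct (int01_emp_gap_pow_exists F r s n z I) as [Jz HJz]; auto; try lra; try lia.
  pose proof (Hopt z Hz Jx Jz HJx HJz) as Hle.
  set (Mid := RInt (emp_gap_pow F n x s) h (1 - h)).
  assert (HJz' : Jz <= B + Mid).
  { apply (int01_lub _ Jz _ HJz). intros a' b' Ha' Hab' Hb' _.
    pose proof (Rmin_l a' h). pose proof (Rmin_r a' h).
    pose proof (Rmax_l b' (1 - h)). pose proof (Rmax_r b' (1 - h)).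
    set (a2 := Rmin a' h) in *. set (b2 := Rmax b' (1 - h)) in *.
    assert (Ha2 : 0 < a2) by (apply Rmin_glb_lt; lra).
    assert (Hb2' : b2 < 1) by (apply Rmax_lub_lt; lra).
    assert (E : RInt (emp_gap_pow F n z s) a' b' <= RInt (emp_gap_pow F n z s) a2 b2).
    { apply RInt_subinterval_le; try lra; [apply ex_RInt_emp_gap_pow; auto; lia || lra|].
      intros; apply rpow_ge0. }
    rewrite (RInt_emp_gap_pow_ends_split z s a2 b2 Hz ltac:(lra) Ha2 ltac:(lra) ltac:(lra) Hb2') in E.
    rewrite <- RInt_emp_gap_pow_mid_replaced in E. fold Mid in E.
    pose proof (HB a2 b2 Ha2 ltac:(lra) ltac:(lra) Hb2'). unfold ends_cost in *. lra. }
  assert (Hx2 : RInt (emp_gap_pow F n x s) a b <= Jx)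
    by (apply int01_ub; auto; try lra; apply ex_RInt_emp_gap_pow; auto; lia || lra).
  rewrite (RInt_emp_gap_pow_ends_split x s a b Hx ltac:(lra) Ha Ha1 Hb2 Hb) in Hx2. fold Mid in Hx2.
  unfold ends_cost. lra.
Qed.

Lemma ends_cost_le_split BL BR K : 0 < K ->
  (forall a, 0 < a -> a <= h -> RInt (dev_pow r q (q h)) a h <= BL) ->
  (forall b, 1 - h <= b -> b < 1 -> RInt (dev_pow r q (q (1 - h))) (1 - h) b <= BR) ->
  forall a b, 0 < a -> a <= h -> 1 - h <= b -> b < 1 ->
  ends_cost x a b <= 2 * h * rpow K s + rpow K (s - r) * (BL + BR).
Proof.
  intros HK HBL HBR. apply ends_cost_le_replaced. intros a b Ha Ha1 Hb2 Hb.
  destruct h_bounds as [Hh Hlast]. pose proof (qf_mono01 F HF) as Hm.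
  pose proof (rpow_ge0 K s). pose proof (rpow_ge0 K (s - r)).
  assert (Hz0 : z O = q h) by reflexivity.
  assert (Hz1 : z (n - 1)%nat = q (1 - h)).
  { unfold z, ends_replaced. destruct (Nat.eqb_spec (n - 1) 0); [lia|]. rewrite Nat.eqb_refl.
    rewrite Hlast. reflexivity. }
  unfold ends_cost. rewrite Hz0, Hz1.
  pose proof (RInt_dev_pow_split q (q h) s r K a h Hm ltac:(lra) Hsr HK Ha Ha1 ltac:(lra)).
  pose proof (RInt_dev_pow_split q (q (1 - h)) s r K (1 - h) b Hm ltac:(lra) Hsr HK ltac:(lra) Hb2 Hb).
  pose proof (HBL a Ha Ha1). pose proof (HBR b Hb2 Hb).
  assert ((h - a) * rpow K s <= h * rpow K s) by (apply Rmult_le_compat_r; lra).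
  assert ((b - (1 - h)) * rpow K s <= h * rpow K s) by (apply Rmult_le_compat_r; lra).
  assert (rpow K (s - r) * RInt (dev_pow r q (q h)) a h <= rpow K (s - r) * BL)
    by (apply Rmult_le_compat_l; lra).
  assert (rpow K (s - r) * RInt (dev_pow r q (q (1 - h))) (1 - h) b <= rpow K (s - r) * BR)
    by (apply Rmult_le_compat_l; lra).
  nra.
Qed.
End Ends.

(* On [h/2, h] the distance from c to phi is at least the gap phi (h/2) - c. *)
Lemma gap_rpow_le_of_comparison r s phi h c B : mono01 phi -> 1 <= s -> s <= r ->
  0 < h < 1 -> 0 <= B ->
  (forall K, 0 < K -> RInt (dev_pow s phi c) (h / 2) h <= 2 * h * rpow K s + rpow K (s - r) * B) ->
  h * rpow (Rmax 0 (phi (h / 2) - c)) r <= 4 * rpow 8 r * B.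
Proof.
  intros Hm Hs Hsr Hh HB Hcomp. pose proof (rpow_ge0 8 r).
  set (D := Rmax 0 (phi (h / 2) - c)).
  destruct (Req_dec D 0) as [->|HD0]; [rewrite rpow_0_l; nra|].
  assert (HD : D = phi (h / 2) - c /\ 0 < D)
    by (unfold D, Rmax in *; destruct (Rle_dec 0 (phi (h / 2) - c)); lra).
  apply (rpow_le_of_split h D s r B); try lra. intros K HK.
  eapply Rle_trans; [|apply (Hcomp K HK)].
  replace (h / 2) with (h - h / 2) at 1 by field.
  apply RInt_ge_const; [lra|apply ex_RInt_dev_pow; auto; lra|].
  intros t Ht. unfold dev_pow. apply rpow_le_compat; [lra|]. split; [lra|].
  assert (phi (h / 2) <= phi t) by (apply Hm; lra).
  rewrite Rabs_left1 by lra. lra.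
Qed.

(* The r-cost of c on ]0, h] is that of phi h up to the gap phi (h/2) - c, which
   the comparison bound in the s-norm controls. *)
Lemma left_end_le_of_comparison r s phi h c B BL : mono01 phi -> 1 <= s -> s <= r ->
  0 < h < 1 -> c <= phi h -> 0 <= B ->
  (forall K, 0 < K -> RInt (dev_pow s phi c) (h / 2) h <= 2 * h * rpow K s + rpow K (s - r) * B) ->
  (forall a, 0 < a -> a <= h -> RInt (dev_pow r phi (phi h)) a h <= BL) ->
  left_end_le r phi c h (rpow 3 r * (h * rpow (phi h - phi (h / 2)) r + 4 * rpow 8 r * B + BL)).
Proof.
  intros Hm Hs Hsr Hh Hc HB Hcomp HBL u v Hu Huv Hv.
  pose proof (gap_rpow_le_of_comparison r s phi h c B Hm Hs Hsr Hh HB Hcomp) as HD.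
  set (m := phi (h / 2)) in *. set (D := Rmax 0 (m - c)) in *.
  assert (HmD : 0 <= D /\ m - c <= D) by (split; [apply Rmax_l|apply Rmax_r]).
  assert (Hmh : m <= phi h) by (apply Hm; lra).
  pose proof (rpow_ge0 3 r).
  eapply Rle_trans.
  { apply (RInt_subinterval_le _ u u v h); try lra; [apply ex_RInt_dev_pow; auto; lra|].
    intros; apply rpow_ge0. }
  eapply Rle_trans.
  { apply (RInt_le_affine _ (dev_pow r phi (phi h)) u h
      (rpow 3 r * (rpow (phi h - m) r + rpow D r)) (rpow 3 r)); try lra;
      try (apply ex_RInt_dev_pow; auto; lra).
    intros t Ht. unfold dev_pow.
    assert (Habs : Rabs (c - phi t) <= (phi h - m) + D + Rabs (phi h - phi t)).
    { pose proof (Rabs_triang (c - phi h) (phi h - phi t)).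
      replace (c - phi h + (phi h - phi t)) with (c - phi t) in * by ring.
      rewrite (Rabs_left1 (c - phi h)) in * by lra. lra. }
    eapply Rle_trans; [apply rpow_le_compat; [lra|split; [apply Rabs_pos|exact Habs]]|].
    eapply Rle_trans; [apply rpow_plus3_le; try lra; apply Rabs_pos|]. right. ring. }
  pose proof (HBL u Hu ltac:(lra)). pose proof (rpow_ge0 (phi h - m) r). pose proof (rpow_ge0 D r).
  assert ((h - u) * (rpow 3 r * (rpow (phi h - m) r + rpow D r)) <=
          rpow 3 r * (h * rpow (phi h - m) r + h * rpow D r)).
  { replace (rpow 3 r * (h * rpow (phi h - m) r + h * rpow D r))
      with (h * (rpow 3 r * (rpow (phi h - m) r + rpow D r))) by ring.
    apply Rmult_le_compat_r; [|lra]. apply Rmult_le_pos; lra. }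
  assert (rpow 3 r * RInt (dev_pow r phi (phi h)) u h <= rpow 3 r * BL) by (apply Rmult_le_compat_l; lra).
  assert (rpow 3 r * (h * rpow D r) <= rpow 3 r * (4 * rpow 8 r * B)) by (apply Rmult_le_compat_l; lra).
  nra.
Qed.

Lemma RInt_dev_pow_edge_le r phi h eta : mono01 phi -> 0 <= r -> 0 < h < 1 ->
  edge_small r phi h eta ->
  forall a, 0 < a -> a <= h -> RInt (dev_pow r phi (phi h)) a h <= rpow 2 r * (2 * eta).
Proof.
  intros Hm Hr Hh [Hedge [_ Htail]] a Ha Hah.
  eapply Rle_trans; [apply RInt_dev_pow_le; auto; lra|].
  apply Rmult_le_compat_l; [apply rpow_ge0|].
  assert ((h - a) * rpow (Rabs (phi h)) r <= h * rpow (Rabs (phi h)) r)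
    by (apply Rmult_le_compat_r; [apply rpow_ge0|lra]).
  pose proof (Htail a Ha Hah). lra.
Qed.

Lemma RInt_dev_pow_edge_le_right r phi h eta : mono01 phi -> 0 <= r -> 0 < h < 1 ->
  edge_small r (refl01 phi) h eta ->
  forall b, 1 - h <= b -> b < 1 -> RInt (dev_pow r phi (phi (1 - h))) (1 - h) b <= rpow 2 r * (2 * eta).
Proof.
  intros Hm Hr Hh Hsmall b Hb1 Hb.
  pose proof (RInt_dev_pow_refl01 phi (phi (1 - h)) r (1 - b) h Hm Hr ltac:(lra) ltac:(lra) ltac:(lra)) as E.
  replace (1 - (1 - b)) with b in E by ring. rewrite <- E.
  apply (RInt_dev_pow_edge_le r (refl01 phi) h eta); auto; try lra. apply mono01_refl01; auto.
Qed.

Definition end_constant (r : R) : R := rpow 3 r * rpow 2 r * (4 + 16 * rpow 8 r).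

Lemma left_end_small_of_comparison r s phi h c eta : mono01 phi -> 1 <= s -> s <= r ->
  0 < h < 1 -> 0 < eta -> edge_small r phi h eta -> c <= phi h ->
  (forall K, 0 < K -> RInt (dev_pow s phi c) (h / 2) h <=
     2 * h * rpow K s + rpow K (s - r) * (rpow 2 r * (2 * eta) + rpow 2 r * (2 * eta))) ->
  left_end_le r phi c h (end_constant r * eta).
Proof.
  intros Hm Hs Hsr Hh Heta Hsmall Hc Hcomp u v Hu Huv Hv.
  pose proof (rpow_ge0 2 r). pose proof (rpow_ge0 3 r). pose proof (rpow_ge0 8 r).
  eapply Rle_trans.
  { apply (left_end_le_of_comparison r s phi h c (rpow 2 r * (2 * eta) + rpow 2 r * (2 * eta))
      (rpow 2 r * (2 * eta))); auto; try nra.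
    apply RInt_dev_pow_edge_le; auto; lra. }
  destruct Hsmall as [Hedge1 [Hedge2 _]].
  assert (h * rpow (phi h - phi (h / 2)) r <= rpow 2 r * (2 * eta)).
  { eapply Rle_trans; [apply Rmult_le_compat_l; [lra|apply rpow_diff_le; lra]|].
    replace (h * (rpow 2 r * (rpow (Rabs (phi h)) r + rpow (Rabs (phi (h / 2))) r)))
      with (rpow 2 r * (h * rpow (Rabs (phi h)) r + h * rpow (Rabs (phi (h / 2))) r)) by ring.
    apply Rmult_le_compat_l; lra. }
  unfold end_constant.
  replace (rpow 3 r * rpow 2 r * (4 + 16 * rpow 8 r) * eta) with
    (rpow 3 r * (rpow 2 r * (2 * eta) + 4 * rpow 8 r * (rpow 2 r * (2 * eta) + rpow 2 r * (2 * eta)) +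
                 rpow 2 r * (2 * eta))) by ring.
  apply Rmult_le_compat_l; lra.
Qed.

Lemma optimal_quantizer_ends_small F r s I (x : nat -> nat -> R) :
  is_cdf F -> 1 <= s -> s <= r -> mono_Lr r (qf F) I ->
  (forall n, (4 <= n)%nat -> in_Xi n (x n) /\ s_optimal F s n (x n)) ->
  forall e, 0 < e -> exists N, forall n, (N <= n)%nat -> (4 <= n)%nat ->
    left_end_le r (qf F) (x n O) (1 / INR n) e /\
    right_end_le r (qf F) (x n (n - 1)%nat) (1 / INR n) e.
Proof.
  intros HF Hs Hsr Hq Hx e He. pose proof (qf_mono01 F HF) as Hm.
  assert (HC : 0 < end_constant r).
  { unfold end_constant. pose proof (rpow_ge0 8 r).
    repeat apply Rmult_lt_0_compat; try apply rpow_gt0; lra. }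
  set (eta := e / end_constant r). assert (Heta : 0 < eta) by (apply Rdiv_lt_0_compat; lra).
  assert (Ee : e = end_constant r * eta) by (unfold eta; field; lra).
  destruct (mono_Lr_edge_small r (qf F) I ltac:(lra) Hq eta Heta) as [hL [HhL HL]].
  destruct (mono_Lr_edge_small r (refl01 (qf F)) I ltac:(lra)
    (mono_Lr_refl01 r _ I ltac:(lra) Hq) eta Heta) as [hR [HhR HR]].
  destruct (exists_nat_inv_le (Rmin hL hR)) as [N [_ HN]]; [apply Rmin_glb_lt; lra|].
  exists N. intros n Hn Hn4. pose proof (HN n Hn). pose proof (Rmin_l hL hR). pose proof (Rmin_r hL hR).
  destruct (Hx n Hn4) as [Hxn Hopt].
  destruct (h_bounds n Hn4) as [Hh Hlast]. set (h := 1 / INR n) in *.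
  pose proof (HL h ltac:(lra)) as HsL. pose proof (HR h ltac:(lra)) as HsR.
  set (B := rpow 2 r * (2 * eta)).
  assert (HBL := RInt_dev_pow_edge_le r _ h eta Hm ltac:(lra) ltac:(lra) HsL). fold B in HBL.
  assert (HBR := RInt_dev_pow_edge_le_right r _ h eta Hm ltac:(lra) ltac:(lra) HsR). fold B in HBR.
  pose proof (ends_cost_le_split F r s I n (x n) HF Hs Hsr Hq Hn4 Hxn Hopt B B) as Hends.
  fold h in Hends. rewrite Ee. split.
  - apply (left_end_small_of_comparison r s); auto; try lra.
    + apply (optimal_first_le F r s I); auto.
    + intros K HK.
      specialize (Hends K HK HBL HBR (h / 2) (1 - h) ltac:(lra) ltac:(lra) ltac:(lra) ltac:(lra)).
      cbv beta in Hends. rewrite RInt_point_R in Hends. unfold B in Hends. lra.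
  - apply right_end_le_refl01; auto; try lra.
    apply (left_end_small_of_comparison r s); auto; try lra.
    + apply mono01_refl01; auto.
    + pose proof (optimal_last_ge F r s I n (x n) HF Hs Hsr Hq Hn4 Hxn Hopt) as Hge.
      rewrite Hlast in Hge. unfold refl01. lra.
    + intros K HK. rewrite RInt_dev_pow_refl01 by (auto; lra).
      specialize (Hends K HK HBL HBR h (1 - h / 2) ltac:(lra) ltac:(lra) ltac:(lra) ltac:(lra)).
      cbv beta in Hends. rewrite RInt_point_R in Hends. unfold B in Hends. lra.
Qed.

Lemma optimal_quantizer_cvg F r s (x : nat -> nat -> R) :
  1 <= r -> is_cdf F -> in_Pr r F -> 1 <= s -> s <= r ->
  (forall n, (1 <= n)%nat ->
     in_Xi n (x n) /\
     forall (y : nat -> R) (D1 D2 : R), in_Xi n y ->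
       dist_r s (emp_cdf n (x n)) F D1 -> dist_r s (emp_cdf n y) F D2 -> D1 <= D2) ->
  exists D : nat -> R,
    (forall n, (1 <= n)%nat -> dist_r r (emp_cdf n (x n)) F (D n)) /\ Un_cv D 0.
Proof.
  intros Hr HF HP Hs Hsr Hx. destruct (mono_Lr_qf F r ltac:(lra) HF HP) as [I Hq].
  assert (Hopt : forall n, (4 <= n)%nat -> in_Xi n (x n) /\ s_optimal F s n (x n)).
  { intros n Hn. destruct (Hx n ltac:(lia)) as [Hxn Hmin].
    split; [exact Hxn|apply s_optimal_of_dist_r; auto; lra || lia]. }
  apply (dist_r_emp_cvg_0 F r I x); auto; [intros n Hn; apply Hx; auto|].
  apply (emp_gap_pow_vanishes_of_bracketed F r I); auto.
  - intros n Hn. destruct (Hopt n Hn) as [Hxn Hoptn].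
    split; [exact Hxn|apply (optimal_bracketed F r s I); auto].
  - apply (optimal_quantizer_ends_small F r s I); auto.
Qed.

Theorem corollary5 (r s : R) (F : R -> R) (x : nat -> nat -> R) :
  1 <= r -> is_cdf F -> in_Pr r F -> 1 <= s -> s <= r ->
  (forall n, (1 <= n)%nat ->
     in_Xi n (x n) /\
     forall (y : nat -> R) (D1 D2 : R), in_Xi n y ->
       dist_r s (emp_cdf n (x n)) F D1 ->
       dist_r s (emp_cdf n y) F D2 -> D1 <= D2) ->
  (exists D : nat -> R,
     (forall n, (1 <= n)%nat -> dist_r r (emp_cdf n (x n)) F (D n)) /\
     Un_cv D 0) /\
  (exists D : nat -> R,
     (forall n, (1 <= n)%nat ->
        dist_r r (emp_cdf n (fun i => qf F ((2 * INR i + 1) / (2 * INR n)))) F (D n)) /\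
     Un_cv D 0).
Proof.
  intros Hr HF HP Hs Hsr Hx. split.
  - apply (optimal_quantizer_cvg F r s x); auto.
  - apply (midpoint_quantizer_cvg F r); auto.
Qed.
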